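(* There is a constant $C$, independent of $x,y,\xi$, such that for real $\xi\notin\{\pm k_1,\pm k_2,\pm\xi_1,\dots,\pm\xi_N\}$ and $y<x$ the following hold. (a) If $|\xi|>k_2$: $|R_{\xi,0^+}(x,y)|\le C(1+|\xi|)^{-1}e^{-\tilde B|x-y|}$ when $y<x<-d$, or $d<y<x$, or $y<-d<d<x$; and $|R_{\xi,0^+}(x,y)|\le C(1+|\xi|)^{-1}e^{-\tilde A|x-y|}$ in all other cases with $y<x$. (b) If $k_1<|\xi|<k_2$: $|R_{\xi,0^+}(x,y)|\le C\dfrac{e^{-\tilde B|x-y|}}{\sqrt{|\xi^2-k_1^2|}\prod_{n=1}^N|\xi^2-\xi_n^2|}$. (c) If $|\xi|<k_1$: $|R_{\xi,0^+}(x,y)|\le \dfrac{C}{\sqrt{|\xi^2-k_1^2|}}$. The analogous estimates hold for $x<y$ (with the roles of $x$ and $y$ interchanged).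
   Context: Let $0<k_1<k_2$, $d>0$, $q(x)=(k_2^2-k_1^2)\chi_{[-d,d]}(x)$, and $\tilde A=\sqrt{\xi^2-k_2^2}$, $\tilde B=\sqrt{\xi^2-k_1^2}$. Principal square root on $\mathbb{C}\setminus(-\infty,0]$. For $\xi\in\mathbb{R}$, $u_\pm(\xi,0^+;\cdot)$ are the solutions of $u''+(k_1^2+q(x)-\xi^2)u=0$ (with $u,u'$ continuous) with $u_\pm(\xi,0^+;x)=e^{\pm ix\sqrt{k_1^2-\xi^2}}$ for $\pm x>d$, where $\sqrt{k_1^2-\xi^2}:=i\sqrt{\xi^2-k_1^2}$ for $|\xi|>k_1$ (the $\delta\to0^+$ limit of $\sqrt{k_1^2-\xi^2+i\delta}$). $W(\xi,0^+)=u_-\partial_xu_+-u_+\partial_xu_-$ is their Wronskian. $\xi_1,\dots,\xi_N$ are the zeros of $W(\cdot,0^+)$ in $(k_1,k_2)$. The outgoing resolvent kernel of $\partial_x^2+k_1^2+q(x)-\xi^2$ is $R_{\xi,0^+}(x,y)=u_+(\xi,0^+;x)u_-(\xi,0^+;y)/W(\xi,0^+)$ for $y<x$ and $R_{\xi,0^+}(x,y)=u_-(\xi,0^+;x)u_+(\xi,0^+;y)/W(\xi,0^+)$ for $x<y$. *)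

From Stdlib Require Import Reals List.
From Coquelicot Require Import Coquelicot.
Open Scope R_scope.

Definition qpot (k1 k2 d x : R) : R :=
  if Rle_dec (- d) x then (if Rle_dec x d then k2 ^ 2 - k1 ^ 2 else 0) else 0.

(* sqrt(k1^2 - xi^2) with the convention sqrt(k1^2-xi^2) := i sqrt(xi^2-k1^2)
   for |xi| > k1 (limit delta -> 0+ of sqrt(k1^2 - xi^2 + i delta)). *)
Definition kappa (k1 xi : R) : C :=
  if Rlt_dec (Rabs xi) k1 then (sqrt (k1 ^ 2 - xi ^ 2), 0)
  else (0, sqrt (xi ^ 2 - k1 ^ 2)).

Definition expIC (z : C) : C :=
  (exp (- Im z) * cos (Re z), exp (- Im z) * sin (Re z)).

Definition is_sol (k1 k2 d xi : R) (u du : R -> C) : Prop :=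
  (forall x, is_derive u x (du x)) /\
  (forall x, continuous du x) /\
  (forall x, x <> - d -> x <> d ->
     is_derive du x (Cmult (RtoC (- (k1 ^ 2 + qpot k1 k2 d x - xi ^ 2))) (u x))).

(* Wronskian W = u_- u_+' - u_+ u_-' (evaluated at x = 0; it is constant). *)
Definition wronsk (um dum up dup : R -> C) : C :=
  Cminus (Cmult (um 0) (dup 0)) (Cmult (up 0) (dum 0)).

Definition resolvent (um up : R -> C) (W : C) (x y : R) : C :=
  if Rlt_dec y x then Cmult (Cmult (up x) (um y)) (Cinv W)
  else Cmult (Cmult (um x) (up y)) (Cinv W).

Definition outside_region (d lo hi : R) : Prop :=
  hi < - d \/ d < lo \/ (lo < - d /\ d < hi).

Definition prodR (l : list R) : R := fold_right Rmult 1 l.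

Definition res_bounds (k1 k2 d Cst xi lo hi : R) (zs : list R) (r : C) : Prop :=
  let A := sqrt (xi ^ 2 - k2 ^ 2) in
  let B := sqrt (xi ^ 2 - k1 ^ 2) in
  (k2 < Rabs xi ->
     (outside_region d lo hi ->
        Cmod r <= Cst / (1 + Rabs xi) * exp (- B * Rabs (hi - lo))) /\
     (~ outside_region d lo hi ->
        Cmod r <= Cst / (1 + Rabs xi) * exp (- A * Rabs (hi - lo)))) /\
  (k1 < Rabs xi < k2 ->
     Cmod r <= Cst * exp (- B * Rabs (hi - lo)) /
       (sqrt (Rabs (xi ^ 2 - k1 ^ 2)) *
        prodR (map (fun z => Rabs (xi ^ 2 - z ^ 2)) zs))) /\
  (Rabs xi < k1 -> Cmod r <= Cst / sqrt (Rabs (xi ^ 2 - k1 ^ 2))).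

(* On each of the three intervals cut out by the step the Jost solutions are
   explicit combinations of exponentials and trigonometric functions; since the
   potential is even, [u_-(x) = u_+(-x)], so [R(x, y)] is [u_+(x) u_+(-y) / W].
   For [|xi| > k1] the solution [u_+] is real: it is [exp (- B x)] on the right,
   a combination of [cosl] and [sinl] of [k2^2 - xi^2] across the well, and it
   acquires a [sinh] component of size [W] on the left.  Above [k2] the growth
   [exp (A s)] across the well is compensated by the factor
   [exp (- 2 B d) exp (2 A d)] in [|W|].  In the band [k1 < |xi| < k2], writing
   [sqrt (k2^2 - xi^2) = ka sin p], the Wronskian is
   [- exp (- 2 B d) ka sin (Psi p) / sin p] with [Psi] increasing, so its zeros
   are the finitely many solutions of [Psi p = m PI] and [|W|] is bounded below by
   [B] times the product of the distances [|xi^2 - xi_n^2|].  For [|xi| < k1] one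
   has [|u_+| <= 1] on [[-d, oo)], and the conserved flux [Im (conj u u') = K]
   yields [|W| >= 2 K] and [K |u_+| <= |W|] on the left. *)

From Stdlib Require Import Reals List Lra Lia Psatz ZArith.
From Coquelicot Require Import Coquelicot.
Open Scope R_scope.

(* The solutions of [y'' = - l y] with Cauchy data [(1, 0)], resp. [(0, 1)], at [0]. *)
Definition cosl (l t : R) : R :=
  if Rlt_dec 0 l then cos (sqrt l * t)
  else if Rlt_dec l 0 then cosh (sqrt (- l) * t)
  else 1.

Definition sinl (l t : R) : R :=
  if Rlt_dec 0 l then sin (sqrt l * t) / sqrt l
  else if Rlt_dec l 0 then sinh (sqrt (- l) * t) / sqrt (- l)
  else t.

Lemma is_derive_eq (f : R -> R) (x l l' : R) : is_derive f x l -> l = l' -> is_derive f x l'.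
Proof. intros H ->; exact H. Qed.

Lemma is_derive_cosl l t0 t : is_derive (fun s => cosl l (s - t0)) t (- l * sinl l (t - t0)).
Proof.
  unfold cosl, sinl, cosh, sinh. destruct (Rlt_dec 0 l) as [h|h].
  - assert (hs : 0 < sqrt l) by (apply sqrt_lt_R0; lra).
    assert (e := sqrt_sqrt l (Rlt_le _ _ h)).
    auto_derive; [exact I|]. unfold Rminus. set (s := sqrt l) in *. rewrite <- e. field. lra.
  - destruct (Rlt_dec l 0) as [h'|h'].
    + assert (hs : 0 < sqrt (- l)) by (apply sqrt_lt_R0; lra).
      assert (e := sqrt_sqrt (- l) ltac:(lra)).
      auto_derive; [exact I|]. unfold Rminus. set (s := sqrt (- l)) in *.
      replace l with (- (s * s)) by lra. field. lra.
    + auto_derive; [exact I|]. replace l with 0 by lra. ring.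
Qed.

Lemma is_derive_sinl l t0 t : is_derive (fun s => sinl l (s - t0)) t (cosl l (t - t0)).
Proof.
  unfold cosl, sinl, cosh, sinh. destruct (Rlt_dec 0 l) as [h|h].
  - assert (hs : 0 < sqrt l) by (apply sqrt_lt_R0; lra).
    auto_derive; [exact I|]. unfold Rminus. field. lra.
  - destruct (Rlt_dec l 0) as [h'|h'].
    + assert (hs : 0 < sqrt (- l)) by (apply sqrt_lt_R0; lra).
      auto_derive; [exact I|]. unfold Rminus. field. lra.
    + auto_derive; [exact I|]. ring.
Qed.

Lemma cosl_sinl_sq l t : cosl l t ^ 2 + l * sinl l t ^ 2 = 1.
Proof.
  unfold cosl, sinl, cosh, sinh. destruct (Rlt_dec 0 l) as [h|h].
  - assert (hs : 0 < sqrt l) by (apply sqrt_lt_R0; lra).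
    assert (e := sqrt_sqrt l (Rlt_le _ _ h)).
    pose proof (sin2_cos2 (sqrt l * t)) as hsc. unfold Rsqr in hsc.
    set (s := sqrt l) in *. rewrite <- e. field_simplify; lra.
  - destruct (Rlt_dec l 0) as [h'|h'].
    + assert (hs : 0 < sqrt (- l)) by (apply sqrt_lt_R0; lra).
      assert (e := sqrt_sqrt (- l) ltac:(lra)).
      set (s := sqrt (- l)) in *. replace l with (- (s * s)) by lra.
      assert (H : exp (s * t) * exp (- (s * t)) = 1).
      { rewrite <- exp_plus, Rplus_opp_r. apply exp_0. }
      transitivity (exp (s * t) * exp (- (s * t))); [field; lra | exact H].
    + replace l with 0 by lra. ring.
Qed.

Lemma cosl_0 l : cosl l 0 = 1.
Proof.
  unfold cosl, cosh. rewrite !Rmult_0_r, Ropp_0, exp_0, cos_0.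
  destruct Rlt_dec; [|destruct Rlt_dec]; lra.
Qed.

Lemma sinl_0 l : sinl l 0 = 0.
Proof.
  unfold sinl, sinh. rewrite !Rmult_0_r, Ropp_0, exp_0, sin_0.
  destruct Rlt_dec; [|destruct Rlt_dec]; lra.
Qed.

Lemma cosl_opp l t : cosl l (- t) = cosl l t.
Proof.
  unfold cosl, cosh. rewrite <- !Ropp_mult_distr_r, cos_neg, Ropp_involutive.
  destruct Rlt_dec; [|destruct Rlt_dec]; lra.
Qed.

Lemma sinl_opp l t : sinl l (- t) = - sinl l t.
Proof.
  unfold sinl, sinh. rewrite <- !Ropp_mult_distr_r, sin_neg, Ropp_involutive.
  destruct Rlt_dec; [|destruct Rlt_dec]; [field|field|ring];
    apply Rgt_not_eq, sqrt_lt_R0; lra.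
Qed.

Lemma is_derive_continuous (f : R -> R) x l : is_derive f x l -> continuous f x.
Proof.
  intros H. apply (ex_derive_continuous (K := R_AbsRing) (V := R_NormedModule)).
  exists l. exact H.
Qed.

Lemma continuous_Rmult (f g : R -> R) x :
  continuous f x -> continuous g x -> continuous (fun y => f y * g y) x.
Proof. intros; apply (continuous_mult (U := R_UniformSpace) (K := R_AbsRing)); auto. Qed.

Lemma continuous_Rminus (f g : R -> R) x :
  continuous f x -> continuous g x -> continuous (fun y => f y - g y) x.
Proof.
  intros; apply (continuous_minus (U := R_UniformSpace) (K := R_AbsRing) (V := R_NormedModule));
    auto.
Qed.

Lemma is_derive_Rmult (f g : R -> R) x df dg : is_derive f x df -> is_derive g x dg ->
  is_derive (fun y => f y * g y) x (df * g x + f x * dg).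
Proof. intros. apply (is_derive_mult (K := R_AbsRing)); auto. intros; apply Rmult_comm. Qed.

Lemma is_derive_Rminus (f g : R -> R) x df dg : is_derive f x df -> is_derive g x dg ->
  is_derive (fun y => f y - g y) x (df - dg).
Proof. intros. apply (is_derive_minus (K := R_AbsRing) (V := R_NormedModule)); auto. Qed.

Lemma is_derive_0_eq (f : R -> R) a b :
  (forall x, a < x < b -> is_derive f x 0) ->
  (forall x, a <= x <= b -> continuous f x) ->
  forall s t, a <= s <= b -> a <= t <= b -> f t = f s.
Proof.
  intros Hd Hc.
  assert (Ha : forall t, a <= t <= b -> f t = f a).
  { intros t Ht. destruct (MVT_gen f a t (fun _ => 0)) as [c [_ Hmvt]].
    - intros x Hx. apply Hd. rewrite Rmin_left, Rmax_right in Hx by lra. lra.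
    - intros x Hx. apply continuity_pt_filterlim, Hc.
      rewrite Rmin_left, Rmax_right in Hx by lra. lra.
    - lra. }
  intros s t Hs Ht. rewrite (Ha s Hs), (Ha t Ht). reflexivity.
Qed.

(* The two conserved quantities are the Wronskians of [f] against the
   fundamental solutions centred at [t0]. *)
Lemma cauchy_repr (f df : R -> R) l a b t0 :
  (forall x, is_derive f x (df x)) -> (forall x, continuous df x) ->
  (forall x, a < x < b -> is_derive df x (- l * f x)) -> a <= t0 <= b ->
  forall t, a <= t <= b ->
  f t = f t0 * cosl l (t - t0) + df t0 * sinl l (t - t0) /\
  df t = - l * f t0 * sinl l (t - t0) + df t0 * cosl l (t - t0).
Proof.
  intros Hf Hdc Hdd Ht0 t Ht.
  set (C s := cosl l (s - t0)). set (S s := sinl l (s - t0)).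
  assert (hC : forall x, is_derive C x (- l * S x)) by (intros; apply is_derive_cosl).
  assert (hS : forall x, is_derive S x (C x)) by (intros; apply is_derive_sinl).
  assert (cC : forall x, continuous C x) by (intros; eapply is_derive_continuous, hC).
  assert (cS : forall x, continuous S x) by (intros; eapply is_derive_continuous, hS).
  assert (cf : forall x, continuous f x) by (intros; eapply is_derive_continuous, Hf).
  assert (cmS : forall x, continuous (fun s => - l * S s) x).
  { intros x. apply (continuous_Rmult (fun _ => - l)); [apply continuous_const | auto]. }
  assert (e1 : f t * (- l * S t) - df t * C t = f t0 * (- l * S t0) - df t0 * C t0).
  { apply (is_derive_0_eq (fun s => f s * (- l * S s) - df s * C s) a b); auto.
    - intros x Hx. eapply is_derive_eq.
      + apply is_derive_Rminus; apply is_derive_Rmult; auto.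
        apply (is_derive_scal S x (- l)), hS.
      + simpl. ring.
    - intros x _. apply continuous_Rminus; apply continuous_Rmult; auto. }
  assert (e2 : f t * C t - df t * S t = f t0 * C t0 - df t0 * S t0).
  { apply (is_derive_0_eq (fun s => f s * C s - df s * S s) a b); auto.
    - intros x Hx. eapply is_derive_eq.
      + apply is_derive_Rminus; apply is_derive_Rmult; auto.
      + ring.
    - intros x _. apply continuous_Rminus; apply continuous_Rmult; auto. }
  unfold C, S in *. rewrite Rminus_diag, cosl_0, sinl_0 in e1, e2.
  pose proof (cosl_sinl_sq l (t - t0)) as HI.
  set (c := cosl l (t - t0)) in *. set (s := sinl l (t - t0)) in *.
  replace (df t0) with (- (f t * (- l * s) - df t * c)) by lra.
  replace (f t0) with (f t * c - df t * s) by lra.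
  split.
  - transitivity (f t * (c ^ 2 + l * s ^ 2)); [rewrite HI; ring | ring].
  - transitivity (df t * (c ^ 2 + l * s ^ 2)); [rewrite HI; ring | ring].
Qed.

Definition is_rsol (k1 k2 d xi : R) (f df : R -> R) : Prop :=
  (forall x, is_derive f x (df x)) /\ (forall x, continuous df x) /\
  (forall x, x <> - d -> x <> d ->
     is_derive df x (- (k1 ^ 2 + qpot k1 k2 d x - xi ^ 2) * f x)).

Lemma is_derive_fst (u : R -> C) x l :
  is_derive u x l -> is_derive (fun t => fst (u t)) x (fst l).
Proof.
  intros H. apply (filterdiff_comp' u fst x (fun y => scal y l) fst H).
  apply filterdiff_linear, is_linear_fst.
Qed.

Lemma is_derive_snd (u : R -> C) x l :
  is_derive u x l -> is_derive (fun t => snd (u t)) x (snd l).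
Proof.
  intros H. apply (filterdiff_comp' u snd x (fun y => scal y l) snd H).
  apply filterdiff_linear, is_linear_snd.
Qed.

Lemma continuous_fst_comp (u : R -> C) x :
  continuous u x -> continuous (fun t => fst (u t)) x.
Proof. intros H. apply (continuous_comp u fst x H). destruct (u x). apply continuous_fst. Qed.

Lemma continuous_snd_comp (u : R -> C) x :
  continuous u x -> continuous (fun t => snd (u t)) x.
Proof. intros H. apply (continuous_comp u snd x H). destruct (u x). apply continuous_snd. Qed.

Lemma is_rsol_fst k1 k2 d xi u du : is_sol k1 k2 d xi u du ->
  is_rsol k1 k2 d xi (fun t => fst (u t)) (fun t => fst (du t)).
Proof.
  intros [H1 [H2 H3]]. split; [|split].
  - intros x. apply is_derive_fst, H1.
  - intros x. apply continuous_fst_comp, H2.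
  - intros x h1 h2. eapply is_derive_eq; [apply is_derive_fst, H3; auto | simpl; ring].
Qed.

Lemma is_rsol_snd k1 k2 d xi u du : is_sol k1 k2 d xi u du ->
  is_rsol k1 k2 d xi (fun t => snd (u t)) (fun t => snd (du t)).
Proof.
  intros [H1 [H2 H3]]. split; [|split].
  - intros x. apply is_derive_snd, H1.
  - intros x. apply continuous_snd_comp, H2.
  - intros x h1 h2. eapply is_derive_eq; [apply is_derive_snd, H3; auto | simpl; ring].
Qed.

Lemma qpot_inside k1 k2 d x : - d < x < d -> qpot k1 k2 d x = k2 ^ 2 - k1 ^ 2.
Proof. intros h. unfold qpot. destruct Rle_dec; [destruct Rle_dec|]; lra. Qed.

Lemma qpot_outside k1 k2 d x : x < - d \/ d < x -> qpot k1 k2 d x = 0.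
Proof. intros h. unfold qpot. destruct Rle_dec; [destruct Rle_dec|]; lra. Qed.

Section StepPotential.

Variables k1 k2 d xi : R.
Hypothesis hd : 0 < d.

Lemma rsol_continuous f df : is_rsol k1 k2 d xi f df -> forall x, continuous f x.
Proof. intros [H _] x. eapply is_derive_continuous, H. Qed.

Lemma rsol_inside f df : is_rsol k1 k2 d xi f df ->
  forall t0 t, - d <= t0 <= d -> - d <= t <= d ->
  f t = f t0 * cosl (k2 ^ 2 - xi ^ 2) (t - t0) + df t0 * sinl (k2 ^ 2 - xi ^ 2) (t - t0) /\
  df t = - (k2 ^ 2 - xi ^ 2) * f t0 * sinl (k2 ^ 2 - xi ^ 2) (t - t0)
         + df t0 * cosl (k2 ^ 2 - xi ^ 2) (t - t0).
Proof.
  intros [H1 [H2 H3]] t0 t h0 h. apply (cauchy_repr f df _ (- d) d); auto.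
  intros x hx. eapply is_derive_eq; [apply H3; lra|]. rewrite qpot_inside by lra. ring.
Qed.

Lemma rsol_right f df : is_rsol k1 k2 d xi f df -> forall t, d <= t ->
  f t = f d * cosl (k1 ^ 2 - xi ^ 2) (t - d) + df d * sinl (k1 ^ 2 - xi ^ 2) (t - d) /\
  df t = - (k1 ^ 2 - xi ^ 2) * f d * sinl (k1 ^ 2 - xi ^ 2) (t - d)
         + df d * cosl (k1 ^ 2 - xi ^ 2) (t - d).
Proof.
  intros [H1 [H2 H3]] t h. apply (cauchy_repr f df _ d t); auto; try lra.
  intros x hx. eapply is_derive_eq; [apply H3; lra|]. rewrite qpot_outside by lra. ring.
Qed.

Lemma rsol_left f df : is_rsol k1 k2 d xi f df -> forall t, t <= - d ->
  f t = f (- d) * cosl (k1 ^ 2 - xi ^ 2) (t + d) + df (- d) * sinl (k1 ^ 2 - xi ^ 2) (t + d) /\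
  df t = - (k1 ^ 2 - xi ^ 2) * f (- d) * sinl (k1 ^ 2 - xi ^ 2) (t + d)
         + df (- d) * cosl (k1 ^ 2 - xi ^ 2) (t + d).
Proof.
  intros [H1 [H2 H3]] t h. replace (t + d) with (t - - d) by ring.
  apply (cauchy_repr f df _ t (- d)); auto; try lra.
  intros x hx. eapply is_derive_eq; [apply H3; lra|]. rewrite qpot_outside by lra. ring.
Qed.

Lemma rsol_wronskian f df g dg : is_rsol k1 k2 d xi f df -> is_rsol k1 k2 d xi g dg ->
  forall t, f t * dg t - df t * g t = f 0 * dg 0 - df 0 * g 0.
Proof.
  intros Hf Hg.
  assert (cf := rsol_continuous _ _ Hf). assert (cg := rsol_continuous _ _ Hg).
  destruct Hf as [F1 [F2 F3]]. destruct Hg as [G1 [G2 G3]].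
  set (E s := f s * dg s - df s * g s).
  assert (Hd : forall x, x <> - d -> x <> d -> is_derive E x 0).
  { intros x h1 h2. unfold E. eapply is_derive_eq.
    - apply is_derive_Rminus; apply is_derive_Rmult; auto.
    - ring. }
  assert (Hc : forall x, continuous E x).
  { intros x. unfold E. apply continuous_Rminus; apply continuous_Rmult; auto. }
  assert (const : forall a b, (forall x, a < x < b -> x <> - d /\ x <> d) ->
                  forall s t, a <= s <= b -> a <= t <= b -> E t = E s).
  { intros a b hab. apply is_derive_0_eq; auto.
    intros x hx. apply Hd; apply hab; auto. }
  intros t. fold (E t). fold (E 0).
  destruct (Rle_dec t d); [destruct (Rle_dec (- d) t)|].
  - apply (const (- d) d); intros; lra.
  - rewrite (const (- d) d ltac:(intros; lra) (- d) 0) by lra.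
    apply (const t (- d)); intros; lra.
  - rewrite (const (- d) d ltac:(intros; lra) d 0) by lra.
    apply (const d t); intros; lra.
Qed.

Lemma rsol_zero f df : is_rsol k1 k2 d xi f df -> f d = 0 -> df d = 0 -> forall t, f t = 0.
Proof.
  intros H h1 h2.
  assert (Hin : forall t, - d <= t <= d -> f t = 0 /\ df t = 0).
  { intros t ht. destruct (rsol_inside f df H d t) as [e1 e2]; try lra.
    rewrite e1, e2, h1, h2. split; ring. }
  intros t. destruct (Rle_dec t d); [destruct (Rle_dec (- d) t)|].
  - apply Hin; lra.
  - destruct (rsol_left f df H t) as [e1 _]; try lra.
    destruct (Hin (- d)) as [a1 a2]; try lra. rewrite e1, a1, a2. ring.
  - destruct (rsol_right f df H t) as [e1 _]; try lra. rewrite e1, h1, h2. ring.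
Qed.

(* The potential is even, so [t |-> f (- t)] solves the same equation. *)
Lemma rsol_reflect f df g dg : is_rsol k1 k2 d xi f df -> is_rsol k1 k2 d xi g dg ->
  g (- d) = f d -> dg (- d) = - df d -> (forall t, t < - d -> g t = f (- t)) ->
  forall t, g t = f (- t).
Proof.
  intros Hf Hg e1 e2 Hl.
  assert (Hin : forall t, - d <= t <= d -> g t = f (- t) /\ dg t = - df (- t)).
  { intros t ht.
    destruct (rsol_inside g dg Hg (- d) t) as [a1 a2]; try lra.
    destruct (rsol_inside f df Hf d (- t)) as [b1 b2]; try lra.
    rewrite a1, a2, b1, b2, e1, e2.
    replace (- t - d) with (- (t - - d)) by ring.
    rewrite cosl_opp, sinl_opp. split; ring. }
  intros t. destruct (Rle_dec t d); [destruct (Rle_dec (- d) t)|].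
  - apply Hin; lra.
  - apply Hl; lra.
  - destruct (rsol_right g dg Hg t) as [a1 _]; try lra.
    destruct (rsol_left f df Hf (- t)) as [b1 _]; try lra.
    destruct (Hin d) as [c1 c2]; try lra.
    rewrite a1, b1, c1, c2. replace (- t + d) with (- (t - d)) by ring.
    rewrite cosl_opp, sinl_opp. ring.
Qed.

End StepPotential.

Lemma cauchy_data_right (f df h dh : R -> R) a :
  (forall x, is_derive f x (df x)) -> continuous df a ->
  (forall x, is_derive h x (dh x)) -> continuous dh a ->
  (forall x, a < x -> f x = h x) -> f a = h a /\ df a = dh a.
Proof.
  intros Hf cdf Hh cdh E.
  assert (lim_eq : forall u v : R -> R, continuous u a -> continuous v a ->
            (forall x, a < x -> u x = v x) -> u a = v a).
  { intros u v cu cv Euv.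
    apply (filterlim_locally_unique (F := at_right a) u).
    - exact (filterlim_filter_le_1 _ (filter_le_within _) cu).
    - apply (filterlim_ext_loc v).
      + exists posreal_one. intros y _ hy. symmetry. apply Euv, hy.
      + exact (filterlim_filter_le_1 _ (filter_le_within _) cv). }
  assert (Ed : forall x, a < x -> df x = dh x).
  { intros x hx.
    assert (Hx : is_derive h x (df x)).
    { apply (is_derive_ext_loc f); [|apply Hf].
      apply (filter_imp (fun u => a < u)); [intros u hu; apply E, hu |].
      apply (open_gt a x hx). }
    rewrite <- (is_derive_unique h x _ Hx). apply is_derive_unique, Hh. }
  split; apply lim_eq; auto; eapply is_derive_continuous; [apply Hf | apply Hh].
Qed.

Lemma cauchy_data_left (f df h dh : R -> R) a :
  (forall x, is_derive f x (df x)) -> continuous df a ->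
  (forall x, is_derive h x (dh x)) -> continuous dh a ->
  (forall x, x < a -> f x = h x) -> f a = h a /\ df a = dh a.
Proof.
  intros Hf cdf Hh cdh E.
  assert (lim_eq : forall u v : R -> R, continuous u a -> continuous v a ->
            (forall x, x < a -> u x = v x) -> u a = v a).
  { intros u v cu cv Euv.
    apply (filterlim_locally_unique (F := at_left a) u).
    - exact (filterlim_filter_le_1 _ (filter_le_within _) cu).
    - apply (filterlim_ext_loc v).
      + exists posreal_one. intros y _ hy. symmetry. apply Euv, hy.
      + exact (filterlim_filter_le_1 _ (filter_le_within _) cv). }
  assert (Ed : forall x, x < a -> df x = dh x).
  { intros x hx.
    assert (Hx : is_derive h x (df x)).
    { apply (is_derive_ext_loc f); [|apply Hf].
      apply (filter_imp (fun u => u < a)); [intros u hu; apply E, hu |].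
      apply (open_lt a x hx). }
    rewrite <- (is_derive_unique h x _ Hx). apply is_derive_unique, Hh. }
  split; apply lim_eq; auto; eapply is_derive_continuous; [apply Hf | apply Hh].
Qed.

Lemma exp_le_compat x y : x <= y -> exp x <= exp y.
Proof.
  intros h. destruct (Rle_lt_or_eq_dec _ _ h) as [h'|<-]; [left; apply exp_increasing; auto | lra].
Qed.

Lemma exp_nonneg x : 0 <= exp x.
Proof. left; apply exp_pos. Qed.

(* The shape of [u_+] when [k1 < |xi|]: [F] decays like [exp (- B t)] on the
   right, is controlled across the well by [G], which grows at most like
   [exp (A s)], and picks up a [sinh] component of size [W] on the left. *)
Section PairBounds.

Variables (F G : R -> R) (A B d W Ga : R).
Hypotheses (hd : 0 < d) (hA : 0 < A) (hAB : A <= B) (hGa : 0 <= Ga).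
Hypothesis HR : forall t, d <= t -> F t = exp (- (B * t)).
Hypothesis HI : forall t, - d <= t <= d -> F t = exp (- (B * d)) * G (d - t).
Hypothesis HL : forall t, t <= - d ->
  F t = F (- d) * exp (- (B * (- d - t))) - W * exp (B * d) * sinh (B * (- d - t)) / B.
Hypothesis HG : forall s, 0 <= s <= 2 * d -> Rabs (G s) <= Ga * exp (A * s).

Let X := exp (- (2 * (B - A) * d)).

Lemma pair_bound_right a1 a2 : d <= a1 -> d <= a2 ->
  Rabs (F a1 * F a2) = exp (- (B * (a1 + a2))).
Proof.
  intros h1 h2. rewrite HR, HR by auto. rewrite <- exp_plus, Rabs_pos_eq by apply exp_nonneg.
  f_equal; ring.
Qed.

Lemma bound_inside t : - d <= t <= d -> Rabs (F t) <= Ga * exp (- (B * d) + A * (d - t)).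
Proof.
  intros h. rewrite HI, Rabs_mult, Rabs_pos_eq, exp_plus by (auto; apply exp_nonneg).
  pose proof (HG (d - t) ltac:(lra)). pose proof (exp_pos (- (B * d))). nra.
Qed.

Lemma pair_bound_inside_right a1 a2 : - d <= a1 <= d -> d <= a2 ->
  Rabs (F a1 * F a2) <= Ga * exp (- (A * (a1 + a2))) * X.
Proof.
  intros h1 h2. rewrite Rabs_mult, (HR a2), (Rabs_pos_eq (exp _)) by (auto; apply exp_nonneg).
  eapply Rle_trans; [apply Rmult_le_compat_r; [apply exp_nonneg | apply bound_inside; auto]|].
  unfold X. rewrite !Rmult_assoc, <- !exp_plus. apply Rmult_le_compat_l; auto.
  apply exp_le_compat. nra.
Qed.

Lemma pair_bound_inside a1 a2 : - d <= a1 <= d -> - d <= a2 <= d ->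
  Rabs (F a1 * F a2) <= Ga ^ 2 * exp (- (A * (a1 + a2))) * X.
Proof.
  intros h1 h2. rewrite Rabs_mult.
  eapply Rle_trans; [apply Rmult_le_compat; try apply Rabs_pos; apply bound_inside; eauto|].
  unfold X. replace (Ga * exp (- (B * d) + A * (d - a1)) * (Ga * exp (- (B * d) + A * (d - a2))))
    with (Ga ^ 2 * (exp (- (B * d) + A * (d - a1)) * exp (- (B * d) + A * (d - a2)))) by ring.
  rewrite Rmult_assoc, <- !exp_plus. apply Rmult_le_compat_l; [nra|].
  apply exp_le_compat. nra.
Qed.

Lemma pair_bound_left_right a1 a2 : a1 <= - d -> d <= a2 ->
  Rabs (F a1 * F a2)
  <= Ga * exp (- (B * (a1 + a2))) * X + Rabs W * exp (- (B * (a1 + a2))) / (2 * B).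
Proof.
  intros h1 h2. set (tau := - d - a1). assert (ht : 0 <= tau) by (unfold tau; lra).
  rewrite Rabs_mult, (HR a2), (Rabs_pos_eq (exp (- (B * a2)))), (HL a1)
    by (auto; apply exp_nonneg). fold tau.
  assert (hFd : Rabs (F (- d)) <= Ga * exp (- (B * d) + A * (2 * d))).
  { replace (2 * d) with (d - - d) by ring. apply bound_inside. lra. }
  assert (hsh : 0 <= sinh (B * tau) <= exp (B * tau) / 2).
  { unfold sinh. pose proof (exp_pos (- (B * tau))).
    assert (exp (- (B * tau)) <= exp (B * tau)) by (apply exp_le_compat; nra). lra. }
  assert (hW : Rabs (W * exp (B * d) * sinh (B * tau) / B)
               <= Rabs W * exp (B * d) * (exp (B * tau) / 2) / B).
  { unfold Rdiv. rewrite !Rabs_mult, (Rabs_pos_eq (exp _)), (Rabs_pos_eq (sinh _)),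
      (Rabs_pos_eq (/ B))
      by first [apply exp_nonneg | lra | left; apply Rinv_0_lt_compat; lra].
    apply Rmult_le_compat_r; [left; apply Rinv_0_lt_compat; lra|].
    apply Rmult_le_compat_l; [apply Rmult_le_pos; [apply Rabs_pos | apply exp_nonneg] | lra]. }
  eapply Rle_trans.
  { apply Rmult_le_compat_r; [apply exp_nonneg|]. eapply Rle_trans; [apply Rabs_triang|].
    rewrite Rabs_Ropp, Rabs_mult, (Rabs_pos_eq (exp _)) by apply exp_nonneg.
    apply Rplus_le_compat; [apply Rmult_le_compat_r; [apply exp_nonneg | exact hFd] | exact hW]. }
  rewrite Rmult_plus_distr_r. apply Rplus_le_compat.
  - unfold X. rewrite !Rmult_assoc, <- !exp_plus. apply Rmult_le_compat_l; auto.
    apply exp_le_compat. unfold tau. nra.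
  - right. replace (Rabs W * exp (B * d) * (exp (B * tau) / 2) / B * exp (- (B * a2)))
      with (Rabs W * (exp (B * d) * exp (B * tau) * exp (- (B * a2))) / (2 * B)) by (field; lra).
    rewrite <- !exp_plus. do 3 f_equal. unfold tau. ring.
Qed.

Lemma pair_bound_outside a1 a2 : 0 < a1 + a2 ->
  (d < a1 /\ d < a2) \/ a1 < - d \/ a2 < - d ->
  Rabs (F a1 * F a2) <= Ga * exp (- (B * (a1 + a2))) * X + exp (- (B * (a1 + a2)))
    + Rabs W * exp (- (B * (a1 + a2))) / (2 * B).
Proof.
  intros hT hcase. assert (0 <= X) by apply exp_nonneg.
  pose proof (exp_pos (- (B * (a1 + a2)))).
  assert (0 <= Rabs W * exp (- (B * (a1 + a2))) / (2 * B))
    by (apply Rmult_le_pos; [apply Rmult_le_pos; [apply Rabs_pos | lra] |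
                             left; apply Rinv_0_lt_compat; lra]).
  assert (0 <= Ga * exp (- (B * (a1 + a2))) * X) by (repeat apply Rmult_le_pos; lra).
  destruct hcase as [[h1 h2]|[h|h]].
  - rewrite pair_bound_right by lra. lra.
  - pose proof (pair_bound_left_right a1 a2 ltac:(lra) ltac:(lra)). lra.
  - rewrite Rmult_comm. pose proof (pair_bound_left_right a2 a1 ltac:(lra) ltac:(lra)) as hb.
    rewrite (Rplus_comm a2 a1) in hb. lra.
Qed.

Lemma pair_bound a1 a2 : 0 < a1 + a2 ->
  Rabs (F a1 * F a2) <= (Ga ^ 2 + Ga) * exp (- (A * (a1 + a2))) * X + exp (- (B * (a1 + a2)))
    + Rabs W * exp (- (B * (a1 + a2))) / (2 * B).
Proof.
  intros hT.
  assert (eAB : exp (- (B * (a1 + a2))) <= exp (- (A * (a1 + a2)))) by (apply exp_le_compat; nra).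
  assert (0 <= X) by apply exp_nonneg.
  pose proof (exp_pos (- (B * (a1 + a2)))). pose proof (exp_pos (- (A * (a1 + a2)))).
  assert (0 <= Rabs W * exp (- (B * (a1 + a2))) / (2 * B))
    by (apply Rmult_le_pos; [apply Rmult_le_pos; [apply Rabs_pos | lra] |
                             left; apply Rinv_0_lt_compat; lra]).
  assert (0 <= Ga ^ 2 * exp (- (A * (a1 + a2))) * X) by (repeat apply Rmult_le_pos; nra).
  assert (0 <= Ga * exp (- (A * (a1 + a2))) * X) by (repeat apply Rmult_le_pos; lra).
  assert (Ga * exp (- (B * (a1 + a2))) * X <= Ga * exp (- (A * (a1 + a2))) * X)
    by (apply Rmult_le_compat_r; [| apply Rmult_le_compat_l]; auto).
  replace ((Ga ^ 2 + Ga) * exp (- (A * (a1 + a2))) * X)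
    with (Ga ^ 2 * exp (- (A * (a1 + a2))) * X + Ga * exp (- (A * (a1 + a2))) * X) by ring.
  destruct (Rle_dec a1 (- d)) as [h1|h1].
  { pose proof (pair_bound_left_right a1 a2 h1 ltac:(lra)). lra. }
  destruct (Rle_dec a2 (- d)) as [h2|h2].
  { rewrite Rmult_comm. pose proof (pair_bound_left_right a2 a1 h2 ltac:(lra)) as hb.
    rewrite (Rplus_comm a2 a1) in hb. lra. }
  destruct (Rle_dec a1 d) as [h3|h3]; destruct (Rle_dec a2 d) as [h4|h4].
  - pose proof (pair_bound_inside a1 a2 ltac:(lra) ltac:(lra)). lra.
  - pose proof (pair_bound_inside_right a1 a2 ltac:(lra) ltac:(lra)). lra.
  - rewrite Rmult_comm. pose proof (pair_bound_inside_right a2 a1 ltac:(lra) ltac:(lra)) as hb.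
    rewrite (Rplus_comm a2 a1) in hb. lra.
  - rewrite pair_bound_right by lra. lra.
Qed.

End PairBounds.

Lemma ratio_bound (P W X B eA eB K1 E : R) : 0 < B -> 0 < X -> X * B <= Rabs W -> / X <= E ->
  0 <= K1 -> 0 <= eB <= eA -> P <= K1 * eA * X + eB + Rabs W * eB / (2 * B) ->
  P / Rabs W <= (K1 + E + 1) * eA / B.
Proof.
  intros hB hX hW hE hK [h1 h2] hP.
  assert (hW0 : 0 < Rabs W) by nra.
  apply Rmult_le_reg_r with (Rabs W); auto.
  replace (P / Rabs W * Rabs W) with P by (field; lra).
  eapply Rle_trans; [exact hP|].
  assert (hXW : X <= Rabs W / B)
    by (apply Rmult_le_reg_r with B; [lra|]; field_simplify; lra).
  assert (E1 : K1 * eA * X <= K1 * eA / B * Rabs W).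
  { replace (K1 * eA * X) with (K1 * eA / B * (X * B)) by (field; lra).
    apply Rmult_le_compat_l; [|lra].
    apply Rmult_le_pos; [nra | left; apply Rinv_0_lt_compat; lra]. }
  assert (E2 : eB <= E * eA / B * Rabs W).
  { assert (1 <= E * X).
    { apply Rmult_le_reg_r with (/ X); [apply Rinv_0_lt_compat; lra|].
      rewrite Rmult_assoc, Rinv_r, Rmult_1_l, Rmult_1_r by lra. lra. }
    replace (E * eA / B * Rabs W) with (E * eA * (Rabs W / B)) by (field; lra).
    assert (0 <= E * eA) by nra. nra. }
  assert (E3 : Rabs W * eB / (2 * B) <= eA / B * Rabs W).
  { replace (Rabs W * eB / (2 * B)) with (eB / 2 / B * Rabs W) by (field; lra).
    apply Rmult_le_compat_r; [lra|]. unfold Rdiv.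
    apply Rmult_le_compat_r; [left; apply Rinv_0_lt_compat |]; lra. }
  replace ((K1 + E + 1) * eA / B * Rabs W)
    with (K1 * eA / B * Rabs W + E * eA / B * Rabs W + eA / B * Rabs W) by (field; lra).
  lra.
Qed.

Lemma Rabs_sin_le_id y : 0 <= y -> Rabs (sin y) <= y.
Proof.
  intros hy. destruct (Req_dec y 0) as [->|hy0]; [rewrite sin_0, Rabs_R0; lra|].
  pose proof (sin_lt_x y ltac:(lra)). pose proof (SIN_bound y). pose proof PI2_1.
  apply Rabs_le. split; [|lra].
  destruct (Rle_dec y 1); [|lra].
  assert (0 <= sin y) by (apply sin_ge_0; lra). lra.
Qed.

Lemma sin_ge_third y : 0 <= y <= PI / 2 -> y / 3 <= sin y.
Proof.
  intros h. pose proof PI_4. destruct (pre_sin_bound y 0) as [h1 _]; try lra.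
  unfold sin_approx, sin_term in h1. simpl in h1.
  assert (y * y <= 4) by nra. nra.
Qed.

Lemma Rabs_sin_ge_third y : Rabs y <= PI / 2 -> Rabs y / 3 <= Rabs (sin y).
Proof.
  intros h. destruct (Rle_dec 0 y).
  - rewrite Rabs_pos_eq in * by lra. pose proof (sin_ge_third y ltac:(lra)).
    rewrite Rabs_pos_eq; lra.
  - rewrite Rabs_left in * by lra. pose proof (sin_ge_third (- y) ltac:(lra)) as h'.
    rewrite sin_neg in h'. rewrite Rabs_left1; lra.
Qed.

(* Compare with the nearest multiple of [PI]. *)
Lemma Rabs_sin_ge_dist x : exists m : Z, Rabs (x - IZR m * PI) / 3 <= Rabs (sin x).
Proof.
  pose proof PI_RGT_0.
  destruct (archimed (x / PI + / 2)) as [h1 h2].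
  set (m := (up (x / PI + / 2) - 1)%Z).
  assert (hm : Rabs (x - IZR m * PI) <= PI / 2).
  { unfold m. rewrite minus_IZR. set (u := IZR (up (x / PI + / 2))) in *.
    assert (x = (x / PI) * PI) by (field; lra).
    apply Rabs_le. split.
    - assert ((x / PI - / 2) * PI <= (u - 1) * PI) by (apply Rmult_le_compat_r; lra). nra.
    - assert ((u - 1) * PI >= (x / PI - / 2) * PI) by (apply Rmult_ge_compat_r; lra). nra. }
  exists m. replace (Rabs (sin x)) with (Rabs (sin (x - IZR m * PI))).
  { apply Rabs_sin_ge_third, hm. }
  rewrite sin_minus.
  assert (hs : sin (IZR m * PI) = 0) by (apply sin_eq_0_1; exists m; reflexivity).
  pose proof (sin2_cos2 (IZR m * PI)) as hsc. rewrite hs in hsc. unfold Rsqr in hsc.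
  assert (hc : Rabs (cos (IZR m * PI)) = 1).
  { destruct (Rle_dec 0 (cos (IZR m * PI)));
      [rewrite Rabs_pos_eq by lra | rewrite Rabs_left by lra]; nra. }
  rewrite hs, Rmult_0_r, Rminus_0_r, Rabs_mult, hc. ring.
Qed.

Lemma prodR_pos l : (forall x, In x l -> 0 < x) -> 0 < prodR l.
Proof. induction l; simpl; intros H; [lra | apply Rmult_lt_0_compat; auto]. Qed.

Lemma prodR_le_pow l c : 1 <= c -> (forall x, In x l -> 0 <= x <= c) ->
  0 <= prodR l <= c ^ length l.
Proof.
  induction l as [|a l IH]; simpl; intros hc H; [lra|].
  destruct (IH hc (fun x hx => H x (or_intror hx))). destruct (H a (or_introl eq_refl)).
  split; [apply Rmult_le_pos | apply Rmult_le_compat]; lra.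
Qed.

Lemma prodR_le_mul_pow l c y : 1 <= c -> (forall x, In x l -> 0 <= x <= c) -> In y l ->
  prodR l <= y * c ^ length l.
Proof.
  induction l as [|a l IH]; simpl; intros hc H hy; [contradiction|].
  destruct (prodR_le_pow l c hc (fun x hx => H x (or_intror hx))).
  assert (1 <= c ^ length l) by (apply pow_R1_Rle; lra).
  destruct (H a (or_introl eq_refl)).
  destruct hy as [<-|hy].
  - apply Rmult_le_compat_l; [lra|]. nra.
  - assert (prodR l <= y * c ^ length l) by (apply IH; auto).
    destruct (H y (or_intror hy)).
    assert (a * prodR l <= c * (y * c ^ length l)) by (apply Rmult_le_compat; lra). nra.
Qed.

Lemma sin_inj_0_PI2 p q : 0 <= p <= PI / 2 -> 0 <= q <= PI / 2 -> sin p = sin q -> p = q.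
Proof. intros hp hq e. apply Rle_antisym; apply sin_incr_0; lra. Qed.

Lemma sin_0_PI2 p : 0 < p < PI / 2 -> 0 < sin p < 1.
Proof.
  intros h. pose proof PI_RGT_0. split; [apply sin_gt_0; lra|].
  rewrite <- sin_PI2. apply sin_increasing_1; lra.
Qed.

Lemma cos_0_PI2 p : 0 < p < PI / 2 -> 0 < cos p <= 1.
Proof. intros h. split; [apply cos_gt_0; lra | apply COS_bound]. Qed.

Lemma pow2_inj_nonneg a b : 0 <= a -> 0 <= b -> a ^ 2 = b ^ 2 -> a = b.
Proof. intros ha hb e. nra. Qed.

(* Twice the phase accumulated across the well: in the band [k1 < |xi| < k2]
   the Wronskian is proportional to [sin (Psi ka d p)] (see [band_polar]). *)
Definition Psi (ka d p : R) := 2 * (ka * d * sin p + p).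

Lemma Psi_continuous ka d : continuity (Psi ka d).
Proof.
  unfold Psi. apply continuity_scal, continuity_plus.
  - apply continuity_scal, continuity_sin.
  - apply derivable_continuous, derivable_id.
Qed.

Lemma Psi_incr ka d a b : 0 < ka -> 0 < d -> 0 <= b <= a -> a <= PI / 2 ->
  2 * ka * d * (sin a - sin b) <= Psi ka d a - Psi ka d b /\
  2 * (a - b) <= Psi ka d a - Psi ka d b.
Proof.
  intros hk hd hb ha. pose proof PI_RGT_0.
  assert (sin b <= sin a) by (apply sin_incr_1; lra).
  assert (0 <= ka * d * (sin a - sin b)) by (apply Rmult_le_pos; [nra|lra]).
  unfold Psi. split; nra.
Qed.

Lemma Psi_PI2 ka d : Psi ka d (PI / 2) = 2 * ka * d + PI.
Proof. unfold Psi. rewrite sin_PI2. field. Qed.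

Lemma Psi_range ka d p : 0 < ka -> 0 < d -> 0 < p < PI / 2 ->
  0 < Psi ka d p < Psi ka d (PI / 2).
Proof.
  intros hka hd h. pose proof PI_RGT_0.
  destruct (Psi_incr ka d p 0 hka hd ltac:(lra) ltac:(lra)) as [_ a].
  destruct (Psi_incr ka d (PI / 2) p hka hd ltac:(lra) ltac:(lra)) as [_ b].
  unfold Psi at 2 in a. rewrite sin_0 in a. lra.
Qed.

Lemma Psi_inj ka d p q : 0 < ka -> 0 < d -> 0 <= p <= PI / 2 -> 0 <= q <= PI / 2 ->
  Psi ka d p = Psi ka d q -> p = q.
Proof.
  intros hka hd hp hq e. destruct (Rle_dec p q).
  - destruct (Psi_incr ka d q p hka hd ltac:(lra) ltac:(lra)) as [_ a]. lra.
  - destruct (Psi_incr ka d p q hka hd ltac:(lra) ltac:(lra)) as [_ a]. lra.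
Qed.

(* [Psi ka d] increases from [0] to [Psi ka d (PI / 2)] on [[0, PI / 2]]; its
   crossings of the levels [m PI] give the zeros of the Wronskian. *)
Definition nzeros (ka d : R) : nat := Z.to_nat (- up (- (Psi ka d (PI / 2) / PI))).

Lemma nzeros_spec ka d : 0 < ka -> 0 < d ->
  INR (nzeros ka d) * PI < Psi ka d (PI / 2) <= (INR (nzeros ka d) + 1) * PI.
Proof.
  intros hka hd. pose proof PI_RGT_0. pose proof (Psi_PI2 ka d).
  set (Pm := Psi ka d (PI / 2)) in *.
  assert (hr : 0 < Pm / PI) by (apply Rdiv_lt_0_compat; nra).
  destruct (archimed (- (Pm / PI))) as [h1 h2].
  set (m := (- up (- (Pm / PI)))%Z).
  assert (hm1 : IZR m < Pm / PI) by (unfold m; rewrite opp_IZR; lra).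
  assert (hm2 : Pm / PI <= IZR m + 1) by (unfold m; rewrite opp_IZR; lra).
  assert (hm0 : (-1 < m)%Z) by (apply lt_IZR; lra).
  unfold nzeros. fold Pm m. rewrite INR_IZR_INZ, Z2Nat.id by lia.
  assert (e : Pm = Pm / PI * PI) by (field; lra).
  split; rewrite e at 1; [apply Rmult_lt_compat_r | apply Rmult_le_compat_r]; lra.
Qed.

(* The specification is guarded by the hypotheses on [ka] and [d], so that
   [zero_angle] does not depend on their proofs. *)
Lemma zero_angle_ex ka d (m : nat) : {p | 0 < ka -> 0 < d -> (1 <= m <= nzeros ka d)%nat ->
  0 < p < PI / 2 /\ Psi ka d p = INR m * PI}.
Proof.
  pose proof PI_RGT_0.
  destruct (Rlt_dec 0 ka) as [hka|hka]; [|exists 0; intros; lra].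
  destruct (Rlt_dec 0 d) as [hd|hd]; [|exists 0; intros; lra].
  destruct (nzeros_spec ka d hka hd) as [hM _]. rewrite Psi_PI2 in hM.
  destruct (le_dec 1 m) as [h1|h1]; [destruct (le_dec m (nzeros ka d)) as [h2|h2]|];
    [| exists 0; intros; lia | exists 0; intros; lia].
  assert (hm1 : 1 <= INR m) by (apply (le_INR 1); auto).
  assert (hm2 : INR m <= INR (nzeros ka d)) by (apply le_INR; auto).
  assert (hy : Rmin (Psi ka d 0) (Psi ka d (PI / 2)) <= INR m * PI
               <= Rmax (Psi ka d 0) (Psi ka d (PI / 2))).
  { rewrite Psi_PI2. unfold Psi. rewrite sin_0.
    replace (2 * (ka * d * 0 + 0)) with 0 by ring.
    rewrite Rmin_left, Rmax_right by nra. nra. }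
  destruct (IVT_gen (Psi ka d) 0 (PI / 2) (INR m * PI) (Psi_continuous ka d) hy) as [p [hp ep]].
  rewrite Rmin_left, Rmax_right in hp by lra.
  exists p. intros _ _ _. split; auto. split.
  - destruct (Req_dec p 0) as [e|e]; [|lra]. subst. unfold Psi in ep. rewrite sin_0 in ep. nra.
  - destruct (Req_dec p (PI / 2)) as [e|e]; [|lra]. subst. rewrite Psi_PI2 in ep. nra.
Qed.

Definition zero_angle (ka d : R) (m : nat) : R := proj1_sig (zero_angle_ex ka d m).

Lemma zero_angle_spec ka d m : 0 < ka -> 0 < d -> (1 <= m <= nzeros ka d)%nat ->
  0 < zero_angle ka d m < PI / 2 /\ Psi ka d (zero_angle ka d m) = INR m * PI.
Proof. unfold zero_angle. destruct (zero_angle_ex ka d m) as [p hp]. exact hp. Qed.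

Section Zeros.

Variables (k1 k2 ka d : R) (Wf phf Bf ef : R -> R).
Hypotheses (hk1 : 0 < k1) (hk12 : k1 < k2) (hd : 0 < d) (hka : 0 < ka).
Hypothesis hka2 : ka ^ 2 = k2 ^ 2 - k1 ^ 2.
Hypothesis Hpolar : forall xi, k1 < Rabs xi < k2 ->
  0 < phf xi < PI / 2 /\ xi ^ 2 = k2 ^ 2 - ka ^ 2 * sin (phf xi) ^ 2 /\
  Bf xi = ka * cos (phf xi) /\ exp (- (2 * ka * d)) <= ef xi /\
  Wf xi = - ef xi * ka * sin (Psi ka d (phf xi)) / sin (phf xi).

Local Notation nz := (nzeros ka d).
Local Notation angle := (zero_angle ka d).

Definition zero_at (m : nat) : R := sqrt (k2 ^ 2 - ka ^ 2 * sin (angle m) ^ 2).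

Lemma zero_at_spec m : (1 <= m <= nz)%nat ->
  k1 < zero_at m < k2 /\ zero_at m ^ 2 = k2 ^ 2 - ka ^ 2 * sin (angle m) ^ 2 /\
  phf (zero_at m) = angle m.
Proof.
  intros hm. destruct (zero_angle_spec ka d m hka hd hm) as [hp _].
  destruct (sin_0_PI2 _ hp) as [s1 s2].
  assert (w1 : 0 < ka ^ 2 * (1 - sin (angle m) ^ 2)) by (apply Rmult_lt_0_compat; nra).
  assert (w2 : 0 < ka ^ 2 * sin (angle m) ^ 2) by (apply Rmult_lt_0_compat; nra).
  assert (e2 : zero_at m ^ 2 = k2 ^ 2 - ka ^ 2 * sin (angle m) ^ 2)
    by (unfold zero_at; rewrite pow2_sqrt; nra).
  assert (hz0 : 0 <= zero_at m) by apply sqrt_pos.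
  assert (r : k1 < zero_at m < k2) by (split; nra).
  split; [exact r | split; [exact e2|]].
  destruct (Hpolar (zero_at m)) as [q1 [q2 _]]; [rewrite Rabs_pos_eq; lra|].
  destruct (sin_0_PI2 _ q1).
  apply sin_inj_0_PI2; try lra. apply pow2_inj_nonneg; nra.
Qed.

Definition zeros : list R := map zero_at (seq 1 nz).

Lemma In_zeros z : In z zeros <-> exists m, (1 <= m <= nz)%nat /\ z = zero_at m.
Proof.
  unfold zeros. rewrite in_map_iff. split.
  - intros [m [e hm]]. apply in_seq in hm. exists m. split; [lia | auto].
  - intros [m [hm e]]. exists m. split; auto. apply in_seq. lia.
Qed.

Lemma NoDup_zeros : NoDup zeros.
Proof.
  apply NoDup_map_NoDup_ForallPairs; [|apply seq_NoDup].
  intros a b ha hb e. apply in_seq in ha. apply in_seq in hb.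
  destruct (zero_at_spec a ltac:(lia)) as [_ [ea _]].
  destruct (zero_at_spec b ltac:(lia)) as [_ [eb _]].
  destruct (zero_angle_spec ka d a hka hd ltac:(lia)) as [pa qa].
  destruct (zero_angle_spec ka d b hka hd ltac:(lia)) as [pb qb].
  destruct (sin_0_PI2 _ pa). destruct (sin_0_PI2 _ pb).
  assert (hsin : sin (angle a) = sin (angle b)).
  { apply pow2_inj_nonneg; try lra. apply Rmult_eq_reg_l with (ka ^ 2); [|nra].
    assert (zero_at a ^ 2 = zero_at b ^ 2) by (rewrite e; auto). lra. }
  apply sin_inj_0_PI2 in hsin; try lra.
  apply INR_eq, Rmult_eq_reg_r with PI; [|pose proof PI_RGT_0; lra].
  rewrite <- qa, <- qb, hsin. reflexivity.
Qed.

Lemma In_zeros_iff z : In z zeros <-> k1 < z < k2 /\ Wf z = 0.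
Proof.
  rewrite In_zeros. split.
  - intros [m [hm ->]]. destruct (zero_at_spec m hm) as [r [_ efz]]. split; auto.
    destruct (Hpolar (zero_at m)) as [_ [_ [_ [_ ->]]]]; [rewrite Rabs_pos_eq; lra|].
    rewrite efz, (proj2 (zero_angle_spec ka d m hka hd hm)), sin_eq_0_1; [unfold Rdiv; ring|].
    exists (Z.of_nat m). rewrite INR_IZR_INZ. reflexivity.
  - intros [r w]. destruct (Hpolar z) as [q1 [q2 [_ [q4 q5]]]]; [rewrite Rabs_pos_eq; lra|].
    destruct (sin_0_PI2 _ q1) as [s1 s2].
    assert (hs : sin (Psi ka d (phf z)) = 0).
    { rewrite q5 in w. pose proof (exp_pos (- (2 * ka * d))).
      unfold Rdiv in w. apply Rmult_integral in w as [w|w].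
      - apply Rmult_integral in w as [w|w]; [nra | exact w].
      - exfalso. revert w. apply Rinv_neq_0_compat. lra. }
    apply sin_eq_0_0 in hs. destruct hs as [k hk].
    destruct (Psi_range ka d _ hka hd q1) as [g1 g2].
    destruct (nzeros_spec ka d hka hd) as [_ hM]. pose proof PI_RGT_0.
    assert (k1' : (0 < k)%Z) by (apply lt_IZR; rewrite hk in g1; nra).
    assert (k2' : (k < Z.of_nat nz + 1)%Z).
    { apply lt_IZR. rewrite plus_IZR, <- INR_IZR_INZ. rewrite hk in g2. nra. }
    exists (Z.to_nat k). assert (hm : (1 <= Z.to_nat k <= nz)%nat) by lia. split; auto.
    destruct (zero_angle_spec ka d _ hka hd hm) as [p1 p2].
    rewrite INR_IZR_INZ, Z2Nat.id in p2 by lia.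
    assert (e : phf z = angle (Z.to_nat k)) by (apply (Psi_inj ka d); lra).
    destruct (zero_at_spec _ hm) as [_ [e2 _]].
    apply pow2_inj_nonneg; [lra | apply sqrt_pos |]. rewrite e2, <- e, <- q2. reflexivity.
Qed.

Definition zero_prod (xi : R) : R := prodR (map (fun z => Rabs (xi ^ 2 - z ^ 2)) zeros).

Definition zero_prod_max : R := Rmax 1 (ka ^ 2) ^ nz.

Lemma zero_factor_bound xi : k1 < Rabs xi < k2 ->
  forall x, In x (map (fun z => Rabs (xi ^ 2 - z ^ 2)) zeros) -> 0 <= x <= Rmax 1 (ka ^ 2).
Proof.
  intros hxi x hx. apply in_map_iff in hx. destruct hx as [z [<- hz]].
  apply In_zeros in hz. destruct hz as [m [hm ->]]. destruct (zero_at_spec m hm) as [[r1 r2] _].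
  assert (ka ^ 2 <= Rmax 1 (ka ^ 2)) by apply Rmax_r. rewrite <- pow2_abs.
  split; [apply Rabs_pos | apply Rabs_le; split; nra].
Qed.

Lemma zero_prod_le xi : k1 < Rabs xi < k2 -> 0 <= zero_prod xi <= zero_prod_max.
Proof.
  intros hxi. unfold zero_prod, zero_prod_max.
  replace nz with (length (map (fun z => Rabs (xi ^ 2 - z ^ 2)) zeros))
    by (unfold zeros; rewrite !length_map, length_seq; reflexivity).
  apply prodR_le_pow; [apply Rmax_l | apply zero_factor_bound; auto].
Qed.

Lemma zero_prod_le_factor xi m : k1 < Rabs xi < k2 -> (1 <= m <= nz)%nat ->
  zero_prod xi <= Rabs (xi ^ 2 - zero_at m ^ 2) * zero_prod_max.
Proof.
  intros hxi hm. unfold zero_prod, zero_prod_max.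
  replace nz with (length (map (fun z => Rabs (xi ^ 2 - z ^ 2)) zeros))
    by (unfold zeros; rewrite !length_map, length_seq; reflexivity).
  apply prodR_le_mul_pow; [apply Rmax_l | apply zero_factor_bound; auto |].
  apply in_map_iff. exists (zero_at m). split; auto. apply In_zeros. exists m; auto.
Qed.

Lemma zero_prod_pos xi : k1 < Rabs xi < k2 -> ~ In (Rabs xi) zeros -> 0 < zero_prod xi.
Proof.
  intros hxi hnot. apply prodR_pos. intros x hx. apply in_map_iff in hx.
  destruct hx as [z [<- hz]]. apply Rabs_pos_lt. intro E. apply hnot.
  assert (hz' := hz). apply In_zeros in hz'. destruct hz' as [m [hm ->]].
  replace (Rabs xi) with (zero_at m); [exact hz|].
  apply pow2_inj_nonneg; [apply sqrt_pos | apply Rabs_pos |]. rewrite pow2_abs. lra.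
Qed.

Section LowerBound.

Variable xi : R.
Hypothesis hxi : k1 < Rabs xi < k2.
Let p := phf xi.
Let e0 := exp (- (2 * ka * d)).

Lemma Wf_ge_sin_Psi_div : e0 * ka * Rabs (sin (Psi ka d p)) / sin p <= Rabs (Wf xi).
Proof.
  destruct (Hpolar xi hxi) as [q1 [_ [_ [q4 ->]]]]. fold p in q1 |- *. change (e0 <= ef xi) in q4.
  destruct (sin_0_PI2 p q1). assert (he0 : 0 < e0) by apply exp_pos.
  unfold Rdiv. rewrite !Rabs_mult, Rabs_Ropp, Rabs_inv.
  rewrite (Rabs_pos_eq (ef xi)), (Rabs_pos_eq ka), (Rabs_pos_eq (sin p)) by lra.
  apply Rmult_le_compat_r; [left; apply Rinv_0_lt_compat; lra|].
  apply Rmult_le_compat_r; [apply Rabs_pos | nra].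
Qed.

Lemma Wf_ge_sin_Psi : e0 * ka * Rabs (sin (Psi ka d p)) <= Rabs (Wf xi).
Proof.
  destruct (Hpolar xi hxi) as [q1 _]. fold p in q1. destruct (sin_0_PI2 p q1) as [s0 s1].
  assert (he0 : 0 < e0) by apply exp_pos.
  eapply Rle_trans; [|apply Wf_ge_sin_Psi_div]. unfold Rdiv.
  rewrite <- (Rmult_1_r (e0 * ka * Rabs (sin (Psi ka d p)))) at 1.
  apply Rmult_le_compat_l.
  - apply Rmult_le_pos; [apply Rmult_le_pos; lra | apply Rabs_pos].
  - rewrite <- Rinv_1. apply Rinv_le_contravar; lra.
Qed.

Lemma Wf_ge_below (m : Z) : IZR m <= 0 ->
  Rabs (Psi ka d p - IZR m * PI) / 3 <= Rabs (sin (Psi ka d p)) ->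
  2 / 3 * e0 * ka <= Rabs (Wf xi).
Proof.
  intros hm hsl. destruct (Hpolar xi hxi) as [q1 _]. fold p in q1.
  destruct (sin_0_PI2 p q1). pose proof PI_RGT_0.
  destruct (Psi_incr ka d p 0 hka hd ltac:(lra) ltac:(lra)) as [_ g].
  unfold Psi at 2 in g. rewrite sin_0 in g.
  pose proof (sin_lt_x p ltac:(lra)).
  assert (Rabs (Psi ka d p - IZR m * PI) >= 2 * sin p) by (rewrite Rabs_pos_eq; nra).
  eapply Rle_trans; [|apply Wf_ge_sin_Psi_div].
  apply Rmult_le_reg_r with (sin p); [lra|].
  replace (e0 * ka * Rabs (sin (Psi ka d p)) / sin p * sin p)
    with (e0 * ka * Rabs (sin (Psi ka d p))) by (field; lra).
  assert (he0 : 0 < e0) by apply exp_pos. assert (0 < e0 * ka) by nra. nra.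
Qed.

Lemma Wf_ge_above (m : Z) : INR nz + 1 <= IZR m ->
  Rabs (Psi ka d p - IZR m * PI) / 3 <= Rabs (sin (Psi ka d p)) ->
  2 / 3 * e0 * Bf xi <= Rabs (Wf xi).
Proof.
  intros hm hsl. destruct (Hpolar xi hxi) as [q1 [_ [q3 _]]]. fold p in q1, q3.
  destruct (cos_0_PI2 p q1). pose proof PI_RGT_0. destruct (nzeros_spec ka d hka hd) as [_ hM].
  destruct (Psi_incr ka d (PI / 2) p hka hd ltac:(lra) ltac:(lra)) as [_ g].
  pose proof (sin_lt_x (PI / 2 - p) ltac:(lra)) as hs. rewrite sin_shift in hs.
  assert (Rabs (Psi ka d p - IZR m * PI) >= 2 * cos p) by (rewrite Rabs_left1; nra).
  eapply Rle_trans; [|apply Wf_ge_sin_Psi]. rewrite q3.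
  assert (he0 : 0 < e0) by apply exp_pos. assert (0 < e0 * ka) by nra. nra.
Qed.

Lemma Wf_ge_near (m : nat) : (1 <= m <= nz)%nat ->
  Rabs (Psi ka d p - INR m * PI) / 3 <= Rabs (sin (Psi ka d p)) ->
  e0 * d * Rabs (xi ^ 2 - zero_at m ^ 2) / 3 <= Rabs (Wf xi).
Proof.
  intros hm hsl. destruct (Hpolar xi hxi) as [q1 [q2 _]]. fold p in q1, q2.
  destruct (sin_0_PI2 p q1). destruct (zero_angle_spec ka d m hka hd hm) as [p1 p2].
  destruct (zero_at_spec m hm) as [_ [e2 _]]. destruct (sin_0_PI2 _ p1).
  set (sm := sin (angle m)) in *.
  assert (hPsi : 2 * ka * d * Rabs (sin p - sm) <= Rabs (Psi ka d p - INR m * PI)).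
  { rewrite <- p2. destruct (Rle_dec (angle m) p).
    - destruct (Psi_incr ka d p (angle m) hka hd ltac:(lra) ltac:(lra)) as [g _]. fold sm in g.
      assert (sm <= sin p) by (apply sin_incr_1; lra).
      rewrite (Rabs_pos_eq (sin p - sm)) by lra. eapply Rle_trans; [exact g | apply Rle_abs].
    - destruct (Psi_incr ka d (angle m) p hka hd ltac:(lra) ltac:(lra)) as [g _]. fold sm in g.
      assert (sin p <= sm) by (apply sin_incr_1; lra).
      rewrite (Rabs_left1 (sin p - sm)), <- Rabs_Ropp by lra.
      eapply Rle_trans; [|apply Rle_abs]. lra. }
  assert (hD : Rabs (xi ^ 2 - zero_at m ^ 2) <= 2 * ka ^ 2 * Rabs (sin p - sm)).
  { rewrite q2, e2.
    replace (k2 ^ 2 - ka ^ 2 * sin p ^ 2 - (k2 ^ 2 - ka ^ 2 * sm ^ 2))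
      with (ka ^ 2 * ((sm + sin p) * - (sin p - sm))) by ring.
    assert (0 <= ka ^ 2) by nra. assert (0 <= sm + sin p) by lra.
    rewrite !Rabs_mult, Rabs_Ropp, (Rabs_pos_eq (ka ^ 2)), (Rabs_pos_eq (sm + sin p))
      by assumption.
    pose proof (Rabs_pos (sin p - sm)).
    assert (0 <= ka ^ 2 * Rabs (sin p - sm)) by nra. nra. }
  eapply Rle_trans; [|apply Wf_ge_sin_Psi].
  assert (he0 : 0 < e0) by apply exp_pos.
  set (D := Rabs (xi ^ 2 - zero_at m ^ 2)) in *.
  set (dPsi := Rabs (Psi ka d p - INR m * PI)) in *.
  assert (h1 : d * D <= ka * dPsi).
  { pose proof (Rabs_pos (sin p - sm)).
    apply Rle_trans with (ka * (2 * ka * d * Rabs (sin p - sm))); [nra|].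
    apply Rmult_le_compat_l; lra. }
  assert (h2 : d * D / 3 <= ka * Rabs (sin (Psi ka d p))) by nra.
  replace (e0 * d * D / 3) with (e0 * (d * D / 3)) by (unfold Rdiv; ring).
  rewrite Rmult_assoc. apply Rmult_le_compat_l; lra.
Qed.

End LowerBound.

Definition zero_const : R := exp (- (2 * ka * d)) * d / (3 * zero_prod_max * (ka + d)).

Lemma zero_const_pos : 0 < zero_const.
Proof.
  unfold zero_const, zero_prod_max. pose proof (exp_pos (- (2 * ka * d))).
  assert (1 <= Rmax 1 (ka ^ 2) ^ nz) by (apply pow_R1_Rle, Rmax_l).
  apply Rdiv_lt_0_compat; [nra | apply Rmult_lt_0_compat; lra].
Qed.

Lemma zero_const_mul_max : zero_const * zero_prod_max = exp (- (2 * ka * d)) * d / (3 * (ka + d)).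
Proof.
  unfold zero_const. assert (1 <= zero_prod_max) by (apply pow_R1_Rle, Rmax_l). field. lra.
Qed.

Lemma Bf_bounds xi : k1 < Rabs xi < k2 -> 0 <= Bf xi <= ka.
Proof.
  intros hxi. destruct (Hpolar xi hxi) as [q1 [_ [-> _]]]. destruct (cos_0_PI2 _ q1).
  split; nra.
Qed.

Lemma zero_bound_far xi : k1 < Rabs xi < k2 ->
  zero_const * Bf xi * zero_prod xi <= exp (- (2 * ka * d)) / 3 * Bf xi.
Proof.
  intros hxi. destruct (Bf_bounds xi hxi). destruct (zero_prod_le xi hxi).
  pose proof zero_const_pos. pose proof (exp_pos (- (2 * ka * d))).
  apply Rle_trans with (zero_const * zero_prod_max * Bf xi).
  { replace (zero_const * zero_prod_max * Bf xi) with (zero_const * Bf xi * zero_prod_max)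
      by ring.
    apply Rmult_le_compat_l; nra. }
  rewrite zero_const_mul_max. apply Rmult_le_compat_r; [lra|].
  apply Rmult_le_reg_r with (3 * (ka + d)); [lra|]. field_simplify; nra.
Qed.

Lemma zero_bound_near xi m : k1 < Rabs xi < k2 -> (1 <= m <= nz)%nat ->
  zero_const * Bf xi * zero_prod xi
  <= exp (- (2 * ka * d)) * d * Rabs (xi ^ 2 - zero_at m ^ 2) / 3.
Proof.
  intros hxi hm. destruct (Bf_bounds xi hxi).
  pose proof (zero_prod_le_factor xi m hxi hm). pose proof (zero_prod_le xi hxi).
  set (D := Rabs (xi ^ 2 - zero_at m ^ 2)) in *. assert (0 <= D) by apply Rabs_pos.
  pose proof zero_const_pos. pose proof (exp_pos (- (2 * ka * d))).
  apply Rle_trans with (zero_const * zero_prod_max * (Bf xi * D)).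
  { replace (zero_const * zero_prod_max * (Bf xi * D))
      with (zero_const * Bf xi * (D * zero_prod_max)) by ring.
    apply Rmult_le_compat_l; [nra | lra]. }
  rewrite zero_const_mul_max.
  apply Rmult_le_reg_r with (3 * (ka + d)); [lra|]. field_simplify; [|lra].
  assert (0 <= exp (- (2 * ka * d)) * d * D) by (repeat apply Rmult_le_pos; lra).
  nra.
Qed.

Lemma Wf_ge_zero_prod xi : k1 < Rabs xi < k2 ->
  zero_const * Bf xi * zero_prod xi <= Rabs (Wf xi).
Proof.
  intros hxi. destruct (Bf_bounds xi hxi). pose proof (exp_pos (- (2 * ka * d))).
  pose proof (zero_bound_far xi hxi) as hfar.
  destruct (Rabs_sin_ge_dist (Psi ka d (phf xi))) as [m hm].
  destruct (Z_le_gt_dec m 0) as [hm0|hm0];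
    [|destruct (Z_le_gt_dec m (Z.of_nat nz)) as [hmM|hmM]].
  - pose proof (Wf_ge_below xi hxi m (IZR_le _ _ hm0) hm). nra.
  - rewrite <- (Z2Nat.id m), <- INR_IZR_INZ in hm by lia.
    assert (hmm : (1 <= Z.to_nat m <= nz)%nat) by lia.
    eapply Rle_trans; [apply (zero_bound_near xi _ hxi hmm) | apply (Wf_ge_near xi hxi _ hmm hm)].
  - assert (hmM' : INR nz + 1 <= IZR m)
      by (rewrite INR_IZR_INZ, <- plus_IZR; apply IZR_le; lia).
    pose proof (Wf_ge_above xi hxi m hmM' hm). nra.
Qed.

End Zeros.

Definition eik_re (ki kr x : R) := exp (- (ki * x)) * cos (kr * x).
Definition eik_im (ki kr x : R) := exp (- (ki * x)) * sin (kr * x).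
Definition deik_re ki kr x := - ki * eik_re ki kr x - kr * eik_im ki kr x.
Definition deik_im ki kr x := - ki * eik_im ki kr x + kr * eik_re ki kr x.

Lemma is_derive_eik_re ki kr x : is_derive (eik_re ki kr) x (deik_re ki kr x).
Proof. unfold deik_re, eik_re, eik_im. auto_derive; [exact I | ring]. Qed.

Lemma is_derive_eik_im ki kr x : is_derive (eik_im ki kr) x (deik_im ki kr x).
Proof. unfold deik_im, eik_re, eik_im. auto_derive; [exact I | ring]. Qed.

Lemma is_derive_eik_re_opp ki kr x :
  is_derive (fun t => eik_re ki kr (- t)) x (- deik_re ki kr (- x)).
Proof. unfold deik_re, eik_re, eik_im. auto_derive; [exact I | ring]. Qed.

Lemma is_derive_eik_im_opp ki kr x :
  is_derive (fun t => eik_im ki kr (- t)) x (- deik_im ki kr (- x)).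
Proof. unfold deik_im, eik_re, eik_im. auto_derive; [exact I | ring]. Qed.

Lemma continuous_deik ki kr x :
  continuous (deik_re ki kr) x /\ continuous (deik_im ki kr) x /\
  continuous (fun t => - deik_re ki kr (- t)) x /\ continuous (fun t => - deik_im ki kr (- t)) x.
Proof.
  unfold deik_re, deik_im, eik_re, eik_im.
  repeat split; apply (ex_derive_continuous (K := R_AbsRing) (V := R_NormedModule));
    auto_derive; exact I.
Qed.

Section CoshBounds.

Variables (A B ka d : R).
Hypotheses (hA : 0 < A) (hka : 0 < ka) (hd : 0 < d) (hB : 0 < B).
Hypothesis hBA : B ^ 2 = A ^ 2 + ka ^ 2.

Lemma exp_pair_bounds s : 0 <= s ->
  1 <= exp (A * s) /\ 0 < exp (- (A * s)) <= 1 /\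
  exp (A * s) * exp (- (A * s)) = 1 /\ exp (A * s) - exp (- (A * s)) <= 2 * A * s * exp (A * s).
Proof.
  intros hs.
  assert (e1 : exp (A * s) * exp (- (A * s)) = 1)
    by (rewrite <- exp_plus, Rplus_opp_r; apply exp_0).
  assert (g1 : 1 <= exp (A * s)) by (rewrite <- exp_0; apply exp_le_compat; nra).
  assert (g2 : exp (- (A * s)) <= 1) by (rewrite <- exp_0; apply exp_le_compat; nra).
  pose proof (exp_pos (- (A * s))).
  pose proof (exp_ineq1_le (- 2 * A * s)).
  assert (exp (- (A * s)) * exp (- (A * s)) = exp (- 2 * A * s))
    by (rewrite <- exp_plus; f_equal; ring).
  repeat split; try lra. nra.
Qed.

Lemma cosh_sinh_comb_bound s : 0 <= s <= 2 * d ->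
  0 <= cosh (A * s) + B * (sinh (A * s) / A) <= (2 + 4 * ka * d) * exp (A * s).
Proof.
  intros hs. destruct (exp_pair_bounds s) as [f1 [f2 [f3 f5]]]; try lra.
  unfold cosh, sinh.
  set (e := exp (A * s)) in *. set (e' := exp (- (A * s))) in *.
  assert (hAB : A <= B) by nra.
  assert (hsh : 0 <= B * ((e - e') / 2 / A))
    by (apply Rmult_le_pos; [lra | apply Rdiv_le_0_compat; lra]).
  split; [lra|].
  destruct (Rle_dec ka A) as [h|h].
  - assert (B <= 2 * A) by nra.
    assert (B * ((e - e') / 2 / A) <= e - e').
    { replace (B * ((e - e') / 2 / A)) with ((B / A) * ((e - e') / 2)) by (field; lra).
      assert (B / A <= 2) by (apply Rmult_le_reg_r with A; [lra|]; field_simplify; lra).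
      nra. }
    assert (0 <= ka * d) by nra. nra.
  - assert (B < 2 * ka) by nra.
    assert (B * ((e - e') / 2 / A) <= B * s * e).
    { replace (B * ((e - e') / 2 / A)) with (B * (e - e') / (2 * A)) by (field; lra).
      apply Rmult_le_reg_r with (2 * A); [lra|]. unfold Rdiv.
      rewrite Rmult_assoc, Rinv_l by lra. nra. }
    assert (B * s * e <= 4 * ka * d * e) by (assert (B * s <= 4 * ka * d) by nra; nra).
    nra.
Qed.

Lemma cosh_sinh_comb_ge : exp (A * d) <= cosh (A * d) + B * (sinh (A * d) / A).
Proof.
  destruct (exp_pair_bounds d) as [f1 [f2 [f3 f5]]]; try lra.
  unfold cosh, sinh. set (e := exp (A * d)) in *. set (e' := exp (- (A * d))) in *.
  assert (hAB : A <= B) by nra.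
  assert ((e - e') / 2 <= B * ((e - e') / 2 / A)); [|lra].
  replace (B * ((e - e') / 2 / A)) with ((B / A) * ((e - e') / 2)) by (field; lra).
  assert (1 <= B / A) by (apply Rmult_le_reg_r with A; [lra|]; field_simplify; lra).
  assert (0 <= (e - e') / 2) by lra. nra.
Qed.

Lemma cosh_sinh_comb_ge' : B * exp (A * d) / 2 <= B * cosh (A * d) + A * sinh (A * d).
Proof.
  destruct (exp_pair_bounds d) as [f1 [f2 [f3 f5]]]; try lra.
  unfold cosh, sinh. nra.
Qed.

End CoshBounds.

(* [p + i q] and [r + i s] are the values of [u] and [u'] at a point, [p s - r q]
   is the flux and [(r - K q)^2 + (s + K p)^2 = |u' + i K u|^2]. *)
Lemma flux_amplitude_ge K p q r s : 0 < K -> p * s - r * q = K ->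
  4 * K ^ 2 <= (r - K * q) ^ 2 + (s + K * p) ^ 2.
Proof.
  intros hK hf.
  replace ((r - K * q) ^ 2 + (s + K * p) ^ 2)
    with ((r + K * q) ^ 2 + (s - K * p) ^ 2 + 4 * K * (p * s - r * q)) by ring.
  rewrite hf. pose proof (pow2_ge_0 (r + K * q)). pose proof (pow2_ge_0 (s - K * p)). nra.
Qed.

Lemma free_amplitude_bound K p q r s C S : 0 < K -> p * s - r * q = K ->
  C ^ 2 + K ^ 2 * S ^ 2 = 1 ->
  K ^ 2 * ((p * C + r * S) ^ 2 + (q * C + s * S) ^ 2) <= (r - K * q) ^ 2 + (s + K * p) ^ 2.
Proof.
  intros hK hf hc.
  assert (e : (r - K * q) ^ 2 + (s + K * p) ^ 2
              - K ^ 2 * ((p * C + r * S) ^ 2 + (q * C + s * S) ^ 2)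
              = (K * p * (K * S) - r * C) ^ 2 + (K * q * (K * S) - s * C) ^ 2 + 2 * K ^ 2).
  { replace ((r - K * q) ^ 2 + (s + K * p) ^ 2) with
      ((r ^ 2 + s ^ 2 + K ^ 2 * (p ^ 2 + q ^ 2)) * (C ^ 2 + K ^ 2 * S ^ 2)
       + 2 * K * (p * s - r * q)) by (rewrite hc; ring).
    rewrite hf. ring. }
  pose proof (pow2_ge_0 (K * p * (K * S) - r * C)).
  pose proof (pow2_ge_0 (K * q * (K * S) - s * C)).
  pose proof (pow2_ge_0 K). lra.
Qed.

Section Jost.

Variables (k1 k2 d xi : R) (up dup um dum : R -> C).
Hypotheses (hk1 : 0 < k1) (hk12 : k1 < k2) (hd : 0 < d).
Hypothesis Hup : is_sol k1 k2 d xi up dup /\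
  (forall x, d < x -> up x = expIC (Cmult (RtoC x) (kappa k1 xi))).
Hypothesis Hum : is_sol k1 k2 d xi um dum /\
  (forall x, x < - d -> um x = expIC (Cmult (RtoC (- x)) (kappa k1 xi))).

Let kr := fst (kappa k1 xi).
Let ki := snd (kappa k1 xi).

Definition up_re t := fst (up t).
Definition dup_re t := fst (dup t).
Definition up_im t := snd (up t).
Definition dup_im t := snd (dup t).
Definition um_re t := fst (um t).
Definition dum_re t := fst (dum t).
Definition um_im t := snd (um t).
Definition dum_im t := snd (dum t).

Lemma rsol_up_re : is_rsol k1 k2 d xi up_re dup_re. Proof. apply is_rsol_fst, Hup. Qed.
Lemma rsol_up_im : is_rsol k1 k2 d xi up_im dup_im. Proof. apply is_rsol_snd, Hup. Qed.
Lemma rsol_um_re : is_rsol k1 k2 d xi um_re dum_re. Proof. apply is_rsol_fst, Hum. Qed.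
Lemma rsol_um_im : is_rsol k1 k2 d xi um_im dum_im. Proof. apply is_rsol_snd, Hum. Qed.

Lemma up_outgoing x : d < x -> up_re x = eik_re ki kr x /\ up_im x = eik_im ki kr x.
Proof.
  intros h. unfold up_re, up_im. rewrite (proj2 Hup x h). unfold ki, kr.
  destruct (kappa k1 xi) as [a b]. unfold expIC, Cmult, RtoC, Re, Im, eik_re, eik_im. simpl.
  replace (x * b + 0 * a) with (b * x) by ring. replace (x * a - 0 * b) with (a * x) by ring.
  split; reflexivity.
Qed.

Lemma um_outgoing x : x < - d -> um_re x = eik_re ki kr (- x) /\ um_im x = eik_im ki kr (- x).
Proof.
  intros h. unfold um_re, um_im. rewrite (proj2 Hum x h). unfold ki, kr.
  destruct (kappa k1 xi) as [a b]. unfold expIC, Cmult, RtoC, Re, Im, eik_re, eik_im. simpl.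
  replace (- x * b + 0 * a) with (b * - x) by ring.
  replace (- x * a - 0 * b) with (a * - x) by ring.
  split; reflexivity.
Qed.

Lemma up_data_d :
  up_re d = eik_re ki kr d /\ dup_re d = deik_re ki kr d /\
  up_im d = eik_im ki kr d /\ dup_im d = deik_im ki kr d.
Proof.
  destruct rsol_up_re as [Hf [cf _]]. destruct rsol_up_im as [Hg [cg _]].
  destruct (continuous_deik ki kr d) as [c1 [c2 _]].
  destruct (cauchy_data_right _ _ _ _ d Hf (cf d) (is_derive_eik_re ki kr) c1) as [-> ->];
    [intros; apply up_outgoing; auto|].
  destruct (cauchy_data_right _ _ _ _ d Hg (cg d) (is_derive_eik_im ki kr) c2) as [-> ->];
    [intros; apply up_outgoing; auto|].
  repeat split.
Qed.

Lemma um_data_d :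
  um_re (- d) = eik_re ki kr d /\ dum_re (- d) = - deik_re ki kr d /\
  um_im (- d) = eik_im ki kr d /\ dum_im (- d) = - deik_im ki kr d.
Proof.
  destruct rsol_um_re as [Hf [cf _]]. destruct rsol_um_im as [Hg [cg _]].
  destruct (continuous_deik ki kr (- d)) as [_ [_ [c1 c2]]].
  rewrite <- (Ropp_involutive d) at 2 4 6 8.
  destruct (cauchy_data_left _ _ _ _ (- d) Hf (cf (- d)) (is_derive_eik_re_opp ki kr) c1)
    as [-> ->]; [intros; apply um_outgoing; auto|].
  destruct (cauchy_data_left _ _ _ _ (- d) Hg (cg (- d)) (is_derive_eik_im_opp ki kr) c2)
    as [-> ->]; [intros; apply um_outgoing; auto|].
  repeat split.
Qed.

Lemma um_reflect t : um t = up (- t).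
Proof.
  destruct up_data_d as [a1 [a2 [a3 a4]]]. destruct um_data_d as [b1 [b2 [b3 b4]]].
  assert (hre : um_re t = up_re (- t)).
  { apply (rsol_reflect k1 k2 d xi hd up_re dup_re um_re dum_re rsol_up_re rsol_um_re);
      [congruence | congruence |].
    intros s hs. rewrite (proj1 (um_outgoing s hs)), (proj1 (up_outgoing (- s) ltac:(lra))).
    reflexivity. }
  assert (him : um_im t = up_im (- t)).
  { apply (rsol_reflect k1 k2 d xi hd up_im dup_im um_im dum_im rsol_up_im rsol_um_im);
      [congruence | congruence |].
    intros s hs. rewrite (proj2 (um_outgoing s hs)), (proj2 (up_outgoing (- s) ltac:(lra))).
    reflexivity. }
  unfold um_re, up_re, um_im, up_im in *. destruct (um t), (up (- t)); simpl in *; congruence.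
Qed.

Lemma dum_reflect t : dum_re t = - dup_re (- t) /\ dum_im t = - dup_im (- t).
Proof.
  assert (hopp : is_derive (fun s : R => - s) t (-1)) by (auto_derive; [exact I | ring]).
  assert (refl_derive : forall (f df g dg : R -> R), (forall s, is_derive f s (df s)) ->
            (forall s, is_derive g s (dg s)) -> (forall s, g s = f (- s)) -> dg t = - df (- t)).
  { intros f df g dg Hf Hg E.
    assert (H : is_derive g t (- df (- t))).
    { apply (is_derive_ext (fun s => f (- s))); [intros; symmetry; apply E|].
      eapply is_derive_eq; [apply (is_derive_comp f (fun s => - s)); [apply Hf | exact hopp]|].
      unfold scal; simpl; unfold mult; simpl. ring. }
    rewrite <- (is_derive_unique g t _ H). symmetry. apply is_derive_unique, Hg. }
  destruct rsol_up_re as [F1 _]. destruct rsol_up_im as [G1 _].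
  destruct rsol_um_re as [F2 _]. destruct rsol_um_im as [G2 _].
  split; eapply refl_derive; eauto; intros s;
    unfold um_re, up_re, um_im, up_im; rewrite um_reflect; reflexivity.
Qed.

Lemma um_data_0 : um_re 0 = up_re 0 /\ dum_re 0 = - dup_re 0 /\
  um_im 0 = up_im 0 /\ dum_im 0 = - dup_im 0.
Proof.
  destruct (dum_reflect 0) as [a b]. rewrite Ropp_0 in a, b.
  unfold um_re, up_re, um_im, up_im. rewrite um_reflect, Ropp_0. auto.
Qed.

Lemma wronsk_at_0 : wronsk um dum up dup =
  (2 * (up_re 0 * dup_re 0 - up_im 0 * dup_im 0), 2 * (up_re 0 * dup_im 0 + up_im 0 * dup_re 0)).
Proof.
  destruct um_data_0 as [a1 [a2 [a3 a4]]].
  unfold um_re, dum_re, um_im, dum_im, up_re, dup_re, up_im, dup_im in *.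
  unfold wronsk, Cminus, Cplus, Copp, Cmult.
  destruct (um 0), (dum 0), (up 0), (dup 0). simpl in *. subst. f_equal; ring.
Qed.

Lemma Cmod_resolvent lo hi : lo < hi -> wronsk um dum up dup <> RtoC 0 ->
  let c := Cmod (up hi) * Cmod (up (- lo)) / Cmod (wronsk um dum up dup) in
  Cmod (resolvent um up (wronsk um dum up dup) hi lo) = c /\
  Cmod (resolvent um up (wronsk um dum up dup) lo hi) = c.
Proof.
  intros h hW. unfold resolvent.
  destruct (Rlt_dec lo hi); [|lra]. destruct (Rlt_dec hi lo); [lra|].
  rewrite !Cmod_mult, !Cmod_inv, !um_reflect by exact hW. unfold Rdiv. split; ring.
Qed.

Lemma Cmod_up t : Cmod (up t) = sqrt (up_re t ^ 2 + up_im t ^ 2).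
Proof. unfold up_re, up_im, Cmod. destruct (up t). reflexivity. Qed.

Section Evanescent.

Hypothesis hk : k1 < Rabs xi.
Let B := sqrt (xi ^ 2 - k1 ^ 2).
Let lam := k2 ^ 2 - xi ^ 2.

Lemma ev_sq : k1 ^ 2 < xi ^ 2.
Proof. rewrite <- (pow2_abs xi). nra. Qed.

Lemma ev_B : 0 < B.
Proof. unfold B. apply sqrt_lt_R0. pose proof ev_sq. lra. Qed.

Lemma ev_eik t : eik_re ki kr t = exp (- (B * t)) /\ eik_im ki kr t = 0 /\
  deik_re ki kr t = - B * exp (- (B * t)) /\ deik_im ki kr t = 0.
Proof.
  assert (hkappa : kappa k1 xi = (0, B)) by (unfold kappa; destruct Rlt_dec; [lra | reflexivity]).
  unfold deik_re, deik_im, eik_re, eik_im, ki, kr. rewrite hkappa. simpl.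
  rewrite Rmult_0_l, cos_0, sin_0. repeat split; ring.
Qed.

Lemma ev_up_im t : up_im t = 0.
Proof.
  destruct up_data_d as [_ [_ [g1 g2]]]. destruct (ev_eik d) as [_ [e2 [_ e4]]].
  apply (rsol_zero k1 k2 d xi hd up_im dup_im rsol_up_im); congruence.
Qed.

Lemma ev_dup_im t : dup_im t = 0.
Proof.
  destruct rsol_up_im as [H _]. rewrite <- (is_derive_unique _ _ _ (H t)).
  rewrite (Derive_ext _ (fun _ => 0)) by apply ev_up_im. apply Derive_const.
Qed.

Lemma ev_up_right t : d <= t -> up_re t = exp (- (B * t)).
Proof.
  intros h. rewrite <- (proj1 (ev_eik t)). destruct (Rle_lt_or_eq_dec d t h) as [h'|<-].
  - apply up_outgoing, h'.
  - apply up_data_d.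
Qed.

Lemma ev_up_inside t : - d <= t <= d ->
  up_re t = exp (- (B * d)) * (cosl lam (d - t) + B * sinl lam (d - t)) /\
  dup_re t = - exp (- (B * d)) * (B * cosl lam (d - t) - lam * sinl lam (d - t)).
Proof.
  intros h. destruct (rsol_inside k1 k2 d xi up_re dup_re rsol_up_re d t) as [e1 e2]; try lra.
  destruct up_data_d as [f1 [f2 _]]. destruct (ev_eik d) as [g1 [_ [g3 _]]].
  rewrite e1, e2, f1, f2, g1, g3.
  replace (t - d) with (- (d - t)) by ring. rewrite cosl_opp, sinl_opp. fold lam. split; ring.
Qed.

Definition wronsk_ev : R :=
  - 2 * exp (- (B * d)) ^ 2 * (cosl lam d + B * sinl lam d) * (B * cosl lam d - lam * sinl lam d).

Lemma ev_wronsk : wronsk um dum up dup = (wronsk_ev, 0).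
Proof.
  rewrite wronsk_at_0, !ev_up_im, ev_dup_im.
  destruct (ev_up_inside 0) as [e1 e2]; [lra|].
  rewrite e1, e2, Rminus_0_r. unfold wronsk_ev. f_equal; ring.
Qed.

Lemma ev_wronsk_left : wronsk_ev = exp (- (B * d)) * (dup_re (- d) - B * up_re (- d)).
Proof.
  pose proof (rsol_wronskian k1 k2 d xi hd um_re dum_re up_re dup_re rsol_um_re rsol_up_re (- d))
    as e.
  destruct um_data_d as [a1 [a2 _]]. destruct (ev_eik d) as [g1 [_ [g3 _]]].
  destruct um_data_0 as [b1 [b2 _]].
  rewrite a1, a2, g1, g3, b1, b2 in e.
  destruct (ev_up_inside 0) as [e1 e2]; [lra|]. rewrite e1, e2, Rminus_0_r in e.
  unfold wronsk_ev. lra.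
Qed.

Lemma ev_up_left t : t <= - d ->
  up_re t = up_re (- d) * exp (- (B * (- d - t)))
            - wronsk_ev * exp (B * d) * sinh (B * (- d - t)) / B.
Proof.
  intros h. destruct (rsol_left k1 k2 d xi hd up_re dup_re rsol_up_re t) as [e _]; [lra|].
  rewrite e. assert (hB := ev_B).
  assert (hl : k1 ^ 2 - xi ^ 2 < 0) by (pose proof ev_sq; lra).
  assert (sq : sqrt (- (k1 ^ 2 - xi ^ 2)) = B) by (unfold B; f_equal; ring).
  unfold cosl, sinl, cosh, sinh. destruct (Rlt_dec 0 (k1 ^ 2 - xi ^ 2)); [lra|].
  destruct (Rlt_dec (k1 ^ 2 - xi ^ 2) 0); [|lra]. rewrite sq.
  assert (hd' : dup_re (- d) = wronsk_ev * exp (B * d) + B * up_re (- d)).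
  { assert (ee : exp (- (B * d)) * exp (B * d) = 1)
      by (rewrite <- exp_plus, Rplus_opp_l; apply exp_0).
    rewrite ev_wronsk_left.
    transitivity (exp (- (B * d)) * exp (B * d) * (dup_re (- d) - B * up_re (- d))
                  + B * up_re (- d)); [rewrite ee; ring | ring]. }
  rewrite hd'. replace (- (B * (- d - t))) with (B * (t + d)) by ring.
  replace (B * (- d - t)) with (- (B * (t + d))) by ring.
  field. lra.
Qed.

Lemma ev_Cmod_ratio lo hi : Cmod (up hi) * Cmod (up (- lo)) / Cmod (wronsk um dum up dup) =
  Rabs (up_re hi * up_re (- lo)) / Rabs wronsk_ev.
Proof.
  assert (sq : forall x, sqrt (x ^ 2 + 0 ^ 2) = Rabs x)
    by (intros x; rewrite <- sqrt_Rsqr_abs; f_equal; unfold Rsqr; ring).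
  rewrite !Cmod_up, !ev_up_im, ev_wronsk, Rabs_mult. unfold Cmod. simpl fst; simpl snd.
  rewrite <- !(sq _). reflexivity.
Qed.

Section AboveK2.

Hypothesis hk2 : k2 < Rabs xi.
Let A := sqrt (xi ^ 2 - k2 ^ 2).
Let ka := sqrt (k2 ^ 2 - k1 ^ 2).
Let Ga := 2 + 4 * ka * d.
Let G s := cosl lam s + B * sinl lam s.

Lemma above_sq : k2 ^ 2 < xi ^ 2.
Proof. rewrite <- (pow2_abs xi). nra. Qed.

Lemma above_A : 0 < A.
Proof. unfold A. apply sqrt_lt_R0. pose proof above_sq. lra. Qed.

Lemma above_ka : 0 < ka.
Proof. unfold ka. apply sqrt_lt_R0. nra. Qed.

Lemma above_BA : B ^ 2 = A ^ 2 + ka ^ 2.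
Proof.
  unfold B, A, ka. pose proof above_sq. pose proof ev_sq.
  rewrite !pow2_sqrt by nra. ring.
Qed.

Lemma above_AB : A <= B.
Proof. pose proof above_BA. pose proof above_A. pose proof ev_B. nra. Qed.

Lemma above_lam : lam = - A ^ 2.
Proof. unfold A, lam. rewrite pow2_sqrt; [ring | pose proof above_sq; lra]. Qed.

Lemma above_cosl s : cosl lam s = cosh (A * s) /\ sinl lam s = sinh (A * s) / A.
Proof.
  assert (hl : lam < 0) by (unfold lam; pose proof above_sq; lra).
  assert (hs : sqrt (- lam) = A) by (unfold A, lam; f_equal; ring).
  pose proof above_A.
  unfold cosl, sinl. destruct Rlt_dec; [lra|]. destruct Rlt_dec; [|lra].
  rewrite hs. split; reflexivity.
Qed.

Lemma above_G s : 0 <= s <= 2 * d -> Rabs (G s) <= Ga * exp (A * s).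
Proof.
  intros h. unfold G. rewrite (proj1 (above_cosl s)), (proj2 (above_cosl s)).
  destruct (cosh_sinh_comb_bound A B ka d above_A above_ka ev_B above_BA s h) as [g1 g2].
  rewrite Rabs_pos_eq by exact g1. exact g2.
Qed.

Lemma above_wronsk : exp (- (B * d)) ^ 2 * B * exp (A * d) ^ 2 <= Rabs wronsk_ev.
Proof.
  unfold wronsk_ev. rewrite (proj1 (above_cosl d)), (proj2 (above_cosl d)).
  pose proof above_A. pose proof ev_B.
  pose proof (cosh_sinh_comb_ge A B ka d above_A above_ka hd ev_B above_BA) as g1.
  pose proof (cosh_sinh_comb_ge' A B d above_A hd ev_B) as g2.
  replace (B * cosh (A * d) - lam * (sinh (A * d) / A)) with (B * cosh (A * d) + A * sinh (A * d))
    by (rewrite above_lam; field; lra).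
  set (g := cosh (A * d) + B * (sinh (A * d) / A)) in *.
  set (g' := B * cosh (A * d) + A * sinh (A * d)) in *.
  set (eb := exp (- (B * d))). set (ea := exp (A * d)) in *.
  assert (0 < eb) by apply exp_pos. assert (0 < ea) by apply exp_pos.
  assert (h1 : ea * (B * ea / 2) <= g * g') by (apply Rmult_le_compat; nra).
  replace (- 2 * eb ^ 2 * g * g') with (- (2 * eb ^ 2 * (g * g'))) by ring.
  rewrite Rabs_Ropp, Rabs_pos_eq by (apply Rmult_le_pos; [nra | apply Rmult_le_pos; nra]).
  assert (0 <= eb ^ 2) by nra. nra.
Qed.

Definition const_above : R := (k2 + 1) / ka * (Ga ^ 2 + Ga + exp (2 * ka * d) + 1).

Lemma above_inv_B : / B <= (k2 + 1) / ka / (1 + Rabs xi).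
Proof.
  pose proof ev_B. pose proof above_ka. pose proof (Rabs_pos xi).
  assert (hx : Rabs xi * ka <= k2 * B).
  { assert (Rabs xi ^ 2 * ka ^ 2 <= k2 ^ 2 * B ^ 2).
    { unfold B, ka. rewrite !pow2_sqrt, pow2_abs by (pose proof ev_sq; nra).
      pose proof above_sq. nra. }
    apply Rsqr_incr_0_var; unfold Rsqr; nra. }
  assert (hkaB : ka <= B) by (pose proof above_BA; pose proof above_A; nra).
  assert (1 + Rabs xi <= (k2 + 1) / ka * B).
  { replace ((k2 + 1) / ka * B) with ((k2 * B + B) / ka) by (field; lra).
    apply Rmult_le_reg_r with ka; [lra|]. field_simplify; nra. }
  apply Rmult_le_reg_r with (1 + Rabs xi); [lra|].
  replace ((k2 + 1) / ka / (1 + Rabs xi) * (1 + Rabs xi)) with ((k2 + 1) / ka) by (field; lra).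
  apply Rmult_le_reg_l with B; [lra|].
  replace (B * (/ B * (1 + Rabs xi))) with (1 + Rabs xi) by (field; lra). lra.
Qed.

Lemma above_div_B K e : 0 <= K -> 0 <= e ->
  K * e / B <= ((k2 + 1) / ka * K) / (1 + Rabs xi) * e.
Proof.
  intros hK he. pose proof above_inv_B. pose proof above_ka. pose proof (Rabs_pos xi).
  replace (K * e / B) with (K * e * / B) by (unfold Rdiv; ring).
  replace ((k2 + 1) / ka * K / (1 + Rabs xi) * e)
    with (K * e * ((k2 + 1) / ka / (1 + Rabs xi))) by (field; lra).
  apply Rmult_le_compat_l; nra.
Qed.

Lemma above_inv_X : / exp (- (2 * (B - A) * d)) <= exp (2 * ka * d).
Proof.
  rewrite <- exp_Ropp. apply exp_le_compat.
  pose proof above_BA. pose proof above_A. pose proof ev_B. pose proof above_ka.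
  assert (B - A <= ka); [|nra].
  assert (ka <= B) by nra. assert ((B - A) * (B + A) = ka * ka) by nra. nra.
Qed.

Lemma above_wronsk_X : exp (- (2 * (B - A) * d)) * B <= Rabs wronsk_ev.
Proof.
  eapply Rle_trans; [|apply above_wronsk].
  replace (exp (- (B * d)) ^ 2 * B * exp (A * d) ^ 2) with
    ((exp (- (B * d)) * exp (- (B * d)) * exp (A * d) * exp (A * d)) * B) by ring.
  rewrite <- !exp_plus. right. f_equal. f_equal. ring.
Qed.

Lemma above_bound lo hi : lo < hi ->
  (outside_region d lo hi ->
     Rabs (up_re hi * up_re (- lo)) / Rabs wronsk_ev
       <= const_above / (1 + Rabs xi) * exp (- B * Rabs (hi - lo))) /\
  Rabs (up_re hi * up_re (- lo)) / Rabs wronsk_ev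
    <= const_above / (1 + Rabs xi) * exp (- A * Rabs (hi - lo)).
Proof.
  intros hlt. rewrite (Rabs_pos_eq (hi - lo)) by lra.
  assert (hT : 0 < hi + - lo) by lra.
  pose proof above_AB as hAB. pose proof above_A as hA. pose proof ev_B as hB.
  pose proof above_ka as hka. pose proof (Rabs_pos xi).
  assert (hGa : 0 <= Ga) by (unfold Ga; nra).
  assert (HR := ev_up_right).
  assert (HI : forall t, - d <= t <= d -> up_re t = exp (- (B * d)) * G (d - t))
    by (intros; apply ev_up_inside; auto).
  assert (HL := ev_up_left).
  pose proof (exp_pos (- (B * (hi + - lo)))) as heB. pose proof (exp_pos (2 * ka * d)).
  assert (eAB : exp (- (B * (hi + - lo))) <= exp (- (A * (hi + - lo))))
    by (apply exp_le_compat; nra).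
  assert (hX : 0 < exp (- (2 * (B - A) * d))) by apply exp_pos.
  split.
  - intros hout.
    assert (P := pair_bound_outside up_re G A B d wronsk_ev Ga hd hA hAB hGa HR HI HL above_G
                   hi (- lo) hT ltac:(unfold outside_region in hout; lra)).
    assert (Q := ratio_bound _ _ _ _ _ _ _ _ hB hX above_wronsk_X above_inv_X hGa
                   (conj (Rlt_le _ _ heB) (Rle_refl _)) P).
    eapply Rle_trans; [exact Q|]. eapply Rle_trans; [apply above_div_B; nra|].
    unfold const_above. replace (- B * (hi - lo)) with (- (B * (hi + - lo))) by ring.
    apply Rmult_le_compat_r; [lra|]. unfold Rdiv. apply Rmult_le_compat_r.
    + left; apply Rinv_0_lt_compat; lra.
    + apply Rmult_le_compat_l; [left; apply Rdiv_lt_0_compat; lra | nra].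
  - assert (P := pair_bound up_re G A B d wronsk_ev Ga hd hA hAB hGa HR HI HL above_G
                   hi (- lo) hT).
    assert (hK : 0 <= Ga ^ 2 + Ga) by nra.
    assert (Q := ratio_bound _ _ _ _ _ _ _ _ hB hX above_wronsk_X above_inv_X hK
                   (conj (Rlt_le _ _ heB) eAB) P).
    eapply Rle_trans; [exact Q|]. eapply Rle_trans; [apply above_div_B; nra|].
    unfold const_above. replace (- A * (hi - lo)) with (- (A * (hi + - lo))) by ring.
    right. unfold Rdiv. ring.
Qed.

End AboveK2.

Section Band.

Hypothesis hk2 : Rabs xi < k2.
Let al := sqrt (k2 ^ 2 - xi ^ 2).
Let ka := sqrt (k2 ^ 2 - k1 ^ 2).
Let Mb := 1 + 2 * ka * d.
Let G s := cosl lam s + B * sinl lam s.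

Lemma band_sq : xi ^ 2 < k2 ^ 2.
Proof. rewrite <- (pow2_abs xi). pose proof (Rabs_pos xi). nra. Qed.

Lemma band_al : 0 < al.
Proof. unfold al. apply sqrt_lt_R0. pose proof band_sq. lra. Qed.

Lemma band_ka : 0 < ka.
Proof. unfold ka. apply sqrt_lt_R0. nra. Qed.

Lemma band_B_lt_ka : B < ka.
Proof. unfold B, ka. apply sqrt_lt_1_alt. pose proof ev_sq. pose proof band_sq. lra. Qed.

Lemma band_cosl s : cosl lam s = cos (al * s) /\ sinl lam s = sin (al * s) / al.
Proof.
  assert (0 < lam) by (unfold lam; pose proof band_sq; lra).
  unfold cosl, sinl. destruct Rlt_dec; [split; reflexivity | lra].
Qed.

Lemma band_G s : 0 <= s <= 2 * d -> Rabs (G s) <= Mb * exp (B * s).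
Proof.
  intros h. unfold G. rewrite (proj1 (band_cosl s)), (proj2 (band_cosl s)).
  pose proof band_al. pose proof band_B_lt_ka. pose proof ev_B.
  assert (h1 : Rabs (cos (al * s)) <= 1) by (apply Rabs_le, COS_bound).
  assert (h2 : Rabs (sin (al * s) / al) <= s).
  { unfold Rdiv. rewrite Rabs_mult, (Rabs_pos_eq (/ al)) by (left; apply Rinv_0_lt_compat; lra).
    pose proof (Rabs_sin_le_id (al * s) ltac:(nra)).
    apply Rmult_le_reg_r with al; [lra|]. rewrite Rmult_assoc, Rinv_l by lra. lra. }
  assert (h3 : 1 <= exp (B * s)) by (rewrite <- exp_0; apply exp_le_compat; nra).
  eapply Rle_trans; [apply Rabs_triang|]. rewrite Rabs_mult, (Rabs_pos_eq B) by lra.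
  assert (B * Rabs (sin (al * s) / al) <= 2 * ka * d) by nra.
  unfold Mb. assert (0 <= ka * d) by nra. nra.
Qed.

Definition const_band (c L : R) : R := (Mb ^ 2 + Mb + 1) / c + L / 2.

Lemma band_bound (c P L : R) lo hi : 0 < c -> 0 < P -> P <= L ->
  c * B * P <= Rabs wronsk_ev -> lo < hi ->
  Rabs (up_re hi * up_re (- lo)) / Rabs wronsk_ev <=
    const_band c L * exp (- B * Rabs (hi - lo)) / (B * P).
Proof.
  unfold const_band. intros hc hP hPL hW hlt. rewrite (Rabs_pos_eq (hi - lo)) by lra.
  assert (hT : 0 < hi + - lo) by lra. pose proof ev_B as hB.
  assert (HI : forall t, - d <= t <= d -> up_re t = exp (- (B * d)) * G (d - t))
    by (intros; apply ev_up_inside; auto).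
  assert (hM : 0 <= Mb) by (unfold Mb; pose proof band_ka; nra).
  assert (Q := pair_bound up_re G B B d wronsk_ev Mb hd hB (Rle_refl _) hM ev_up_right HI
                 ev_up_left band_G hi (- lo) hT).
  replace (- (2 * (B - B) * d)) with 0 in Q by ring. rewrite exp_0, Rmult_1_r in Q.
  replace (- B * (hi - lo)) with (- (B * (hi + - lo))) by ring.
  set (e := exp (- (B * (hi + - lo)))) in *. assert (he : 0 < e) by apply exp_pos.
  assert (hcBP : 0 < c * B * P) by (apply Rmult_lt_0_compat; [apply Rmult_lt_0_compat|]; lra).
  set (W := Rabs wronsk_ev) in *.
  apply Rmult_le_reg_r with W; [lra|].
  replace (Rabs (up_re hi * up_re (- lo)) / W * W) with (Rabs (up_re hi * up_re (- lo)))
    by (field; lra).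
  eapply Rle_trans; [exact Q|].
  assert (r1 : 1 <= W / (c * B * P))
    by (apply Rmult_le_reg_r with (c * B * P); [lra|]; field_simplify; lra).
  assert (r2 : 1 <= L / P) by (apply Rmult_le_reg_r with P; [lra|]; field_simplify; lra).
  replace (((Mb ^ 2 + Mb + 1) / c + L / 2) * e / (B * P) * W) with
    ((Mb ^ 2 + Mb + 1) * e * (W / (c * B * P)) + W * e / (2 * B) * (L / P)) by (field; lra).
  assert (0 <= (Mb ^ 2 + Mb + 1) * e) by nra.
  assert (0 <= W * e / (2 * B)) by (apply Rmult_le_pos; [nra | left; apply Rinv_0_lt_compat; lra]).
  nra.
Qed.

(* Polar form of the Wronskian in the band: [al = ka sin p] and [B = ka cos p]. *)
Lemma band_polar : 0 < asin (al / ka) < PI / 2 /\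
  xi ^ 2 = k2 ^ 2 - ka ^ 2 * sin (asin (al / ka)) ^ 2 /\
  B = ka * cos (asin (al / ka)) /\ exp (- (2 * ka * d)) <= exp (- (B * d)) ^ 2 /\
  wronsk_ev = - exp (- (B * d)) ^ 2 * ka * sin (Psi ka d (asin (al / ka))) / sin (asin (al / ka)).
Proof.
  pose proof band_al as hal. pose proof band_ka as hka. pose proof ev_B as hB.
  pose proof band_B_lt_ka. pose proof band_sq. pose proof ev_sq.
  assert (eal : al ^ 2 = k2 ^ 2 - xi ^ 2) by (unfold al; rewrite pow2_sqrt; lra).
  assert (eka : ka ^ 2 = k2 ^ 2 - k1 ^ 2) by (unfold ka; rewrite pow2_sqrt; nra).
  assert (eB : B ^ 2 = xi ^ 2 - k1 ^ 2) by (unfold B; rewrite pow2_sqrt; lra).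
  set (s := al / ka).
  assert (hs : 0 < s < 1).
  { unfold s. split; [apply Rdiv_lt_0_compat; lra|].
    apply Rmult_lt_reg_r with ka; [lra|]. field_simplify; nra. }
  set (p := asin s).
  assert (sp : sin p = s) by (apply sin_asin; lra).
  assert (hp : 0 < p < PI / 2).
  { destruct (asin_bound_lt s ltac:(lra)) as [a1 a2]. fold p in a1, a2. split; auto.
    destruct (Rle_dec p 0) as [h|h]; [|lra]. exfalso.
    assert (hh : sin p <= sin 0) by (apply sin_incr_1; lra). rewrite sin_0 in hh. lra. }
  assert (cp : cos p = B / ka).
  { unfold p. rewrite cos_asin by lra.
    replace (1 - s²) with ((B / ka) ^ 2).
    - apply sqrt_pow2, Rdiv_le_0_compat; lra.
    - unfold s, Rsqr. replace ((B / ka) ^ 2) with (B ^ 2 / ka ^ 2) by (field; lra).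
      replace (1 - al / ka * (al / ka)) with ((ka ^ 2 - al ^ 2) / ka ^ 2) by (field; lra).
      rewrite eB, eal, eka. f_equal; ring. }
  assert (eal2 : al = ka * s) by (unfold s; field; lra).
  assert (eB2 : B = ka * cos p) by (rewrite cp; field; lra).
  split; [auto | split; [| split; [auto | split]]].
  - rewrite sp. unfold s. replace (ka ^ 2 * (al / ka) ^ 2) with (al ^ 2) by (field; lra). lra.
  - rewrite <- Rsqr_pow2. unfold Rsqr. rewrite <- exp_plus. apply exp_le_compat. nra.
  - unfold wronsk_ev. rewrite (proj1 (band_cosl d)), (proj2 (band_cosl d)).
    replace lam with (al ^ 2) by (unfold lam; lra).
    assert (e1 : cos (al * d) + B * (sin (al * d) / al) = sin (al * d + p) / sin p).
    { rewrite sin_plus, sp, eB2, eal2. field. lra. }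
    assert (e2 : B * cos (al * d) - al ^ 2 * (sin (al * d) / al) = ka * cos (al * d + p)).
    { rewrite cos_plus, sp, eB2, eal2. field. lra. }
    rewrite e1, e2.
    replace (Psi ka d p) with (2 * (al * d + p)) by (unfold Psi; rewrite sp, eal2; ring).
    rewrite sin_2a. field. lra.
Qed.

End Band.

End Evanescent.

Section Propagating.

Hypothesis hk : Rabs xi < k1.
Let K := sqrt (k1 ^ 2 - xi ^ 2).

Lemma prop_sq : xi ^ 2 < k1 ^ 2.
Proof. rewrite <- (pow2_abs xi). pose proof (Rabs_pos xi). nra. Qed.

Lemma prop_K : 0 < K.
Proof. unfold K. apply sqrt_lt_R0. pose proof prop_sq. lra. Qed.

Lemma prop_eik t : eik_re ki kr t = cos (K * t) /\ eik_im ki kr t = sin (K * t) /\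
  deik_re ki kr t = - K * sin (K * t) /\ deik_im ki kr t = K * cos (K * t).
Proof.
  assert (hkappa : kappa k1 xi = (K, 0)) by (unfold kappa; destruct Rlt_dec; [reflexivity | lra]).
  unfold deik_re, deik_im, eik_re, eik_im, ki, kr. rewrite hkappa. simpl.
  rewrite Rmult_0_l, Ropp_0, exp_0. repeat split; ring.
Qed.

Lemma prop_up_data_d :
  up_re d = cos (K * d) /\ dup_re d = - K * sin (K * d) /\
  up_im d = sin (K * d) /\ dup_im d = K * cos (K * d).
Proof.
  destruct up_data_d as [-> [-> [-> ->]]]. destruct (prop_eik d) as [-> [-> [-> ->]]].
  repeat split.
Qed.

Lemma prop_up_le_1 t : - d <= t -> Cmod (up t) <= 1.
Proof.
  intros ht. rewrite Cmod_up, <- sqrt_1. apply sqrt_le_1_alt.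
  pose proof (sin2_cos2 (K * t)) as hst. unfold Rsqr in hst.
  destruct (Rle_dec t d).
  - destruct (rsol_inside k1 k2 d xi up_re dup_re rsol_up_re d t) as [e1 _]; try lra.
    destruct (rsol_inside k1 k2 d xi up_im dup_im rsol_up_im d t) as [e2 _]; try lra.
    destruct prop_up_data_d as [f1 [f2 [g1 g2]]]. rewrite e1, e2, f1, f2, g1, g2.
    pose proof (cosl_sinl_sq (k2 ^ 2 - xi ^ 2) (t - d)) as hc.
    pose proof (sin2_cos2 (K * d)) as hs. unfold Rsqr in hs.
    set (C := cosl (k2 ^ 2 - xi ^ 2) (t - d)) in *. set (S := sinl (k2 ^ 2 - xi ^ 2) (t - d)) in *.
    assert (hKl : K ^ 2 <= k2 ^ 2 - xi ^ 2)
      by (unfold K; rewrite pow2_sqrt by (pose proof prop_sq; lra); nra).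
    replace ((cos (K * d) * C + - K * sin (K * d) * S) ^ 2
             + (sin (K * d) * C + K * cos (K * d) * S) ^ 2)
      with ((C ^ 2 + K ^ 2 * S ^ 2) * (sin (K * d) * sin (K * d) + cos (K * d) * cos (K * d)))
      by ring.
    rewrite hs. assert (0 <= S ^ 2) by apply pow2_ge_0. nra.
  - destruct (up_outgoing t ltac:(lra)) as [-> ->].
    destruct (prop_eik t) as [-> [-> _]]. lra.
Qed.

Lemma prop_flux : up_re (- d) * dup_im (- d) - dup_re (- d) * up_im (- d) = K.
Proof.
  rewrite (rsol_wronskian k1 k2 d xi hd up_re dup_re up_im dup_im rsol_up_re rsol_up_im (- d)).
  rewrite <- (rsol_wronskian k1 k2 d xi hd up_re dup_re up_im dup_im rsol_up_re rsol_up_im d).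
  destruct prop_up_data_d as [-> [-> [-> ->]]].
  pose proof (sin2_cos2 (K * d)) as hs. unfold Rsqr in hs.
  transitivity (K * (sin (K * d) * sin (K * d) + cos (K * d) * cos (K * d)));
    [ring | rewrite hs; ring].
Qed.

Lemma prop_Cmod_wronsk : Cmod (wronsk um dum up dup) =
  sqrt ((dup_re (- d) - K * up_im (- d)) ^ 2 + (dup_im (- d) + K * up_re (- d)) ^ 2).
Proof.
  unfold Cmod. f_equal. rewrite wronsk_at_0. simpl.
  destruct um_data_0 as [a1 [a2 [b1 b2]]].
  pose proof (rsol_wronskian k1 k2 d xi hd um_re dum_re up_re dup_re rsol_um_re rsol_up_re (- d))
    as w1.
  pose proof (rsol_wronskian k1 k2 d xi hd um_im dum_im up_im dup_im rsol_um_im rsol_up_im (- d))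
    as w2.
  pose proof (rsol_wronskian k1 k2 d xi hd um_re dum_re up_im dup_im rsol_um_re rsol_up_im (- d))
    as w3.
  pose proof (rsol_wronskian k1 k2 d xi hd um_im dum_im up_re dup_re rsol_um_im rsol_up_re (- d))
    as w4.
  destruct um_data_d as [c1 [c2 [c3 c4]]]. destruct (prop_eik d) as [e1 [e2 [e3 e4]]].
  rewrite a1, a2, b1, b2, c1, c2, c3, c4, e1, e2, e3, e4 in *.
  set (c := cos (K * d)) in *. set (sn := sin (K * d)) in *.
  set (u := dup_re (- d) - K * up_im (- d)). set (v := dup_im (- d) + K * up_re (- d)).
  assert (hre : 2 * (up_re 0 * dup_re 0 - up_im 0 * dup_im 0) = c * u - sn * v)
    by (unfold u, v; nra).
  assert (him : 2 * (up_re 0 * dup_im 0 + up_im 0 * dup_re 0) = c * v + sn * u)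
    by (unfold u, v; nra).
  rewrite hre, him. pose proof (sin2_cos2 (K * d)) as hs. unfold Rsqr in hs. fold c sn in hs.
  transitivity ((sn * sn + c * c) * (u ^ 2 + v ^ 2)); [ring | rewrite hs; ring].
Qed.

Lemma prop_wronsk_ge : 2 * K <= Cmod (wronsk um dum up dup).
Proof.
  pose proof prop_K. rewrite prop_Cmod_wronsk, <- (sqrt_pow2 (2 * K)) by lra.
  apply sqrt_le_1_alt. replace ((2 * K) ^ 2) with (4 * K ^ 2) by ring.
  apply flux_amplitude_ge; [lra | apply prop_flux].
Qed.

Lemma prop_up_left t : t <= - d -> K * Cmod (up t) <= Cmod (wronsk um dum up dup).
Proof.
  intros h. pose proof prop_K.
  rewrite Cmod_up, prop_Cmod_wronsk, <- (sqrt_pow2 K) at 1 by lra. rewrite <- sqrt_mult_alt by nra.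
  apply sqrt_le_1_alt.
  destruct (rsol_left k1 k2 d xi hd up_re dup_re rsol_up_re t) as [-> _]; auto.
  destruct (rsol_left k1 k2 d xi hd up_im dup_im rsol_up_im t) as [-> _]; auto.
  assert (hl : k1 ^ 2 - xi ^ 2 = K ^ 2)
    by (unfold K; rewrite pow2_sqrt; [ring | pose proof prop_sq; lra]).
  rewrite hl. apply free_amplitude_bound; [lra | apply prop_flux | apply cosl_sinl_sq].
Qed.

Lemma prop_bound lo hi : lo < hi ->
  Cmod (up hi) * Cmod (up (- lo)) / Cmod (wronsk um dum up dup) <= 1 / K.
Proof.
  intros hlt. pose proof prop_K as hK. pose proof prop_wronsk_ge as hWK.
  set (W := Cmod (wronsk um dum up dup)) in *.
  pose proof (Cmod_ge_0 (up hi)). pose proof (Cmod_ge_0 (up (- lo))).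
  apply Rmult_le_reg_r with W; [lra|].
  replace (Cmod (up hi) * Cmod (up (- lo)) / W * W) with (Cmod (up hi) * Cmod (up (- lo)))
    by (field; lra).
  replace (1 / K * W) with (W / K) by (field; lra).
  assert (hWK1 : 1 <= W / K) by (apply Rmult_le_reg_r with K; [lra|]; field_simplify; lra).
  assert (hL : forall t, t <= - d -> Cmod (up t) <= W / K).
  { intros t ht. apply Rmult_le_reg_l with K; [lra|].
    replace (K * (W / K)) with W by (field; lra). apply prop_up_left, ht. }
  destruct (Rle_dec hi (- d)) as [h1|h1]; [|destruct (Rle_dec (- lo) (- d)) as [h2|h2]].
  - pose proof (prop_up_le_1 (- lo) ltac:(lra)). pose proof (hL hi h1). nra.
  - pose proof (prop_up_le_1 hi ltac:(lra)). pose proof (hL (- lo) h2). nra.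
  - pose proof (prop_up_le_1 hi ltac:(lra)). pose proof (prop_up_le_1 (- lo) ltac:(lra)). nra.
Qed.

End Propagating.

Section Bounds.

Variables (zs : list R) (c L Cst : R).
Let P := prodR (map (fun z => Rabs (xi ^ 2 - z ^ 2)) zs).
Hypothesis hc : 0 < c.
Hypothesis Hzs : k1 < Rabs xi < k2 -> ~ In (Rabs xi) zs ->
  0 < P <= L /\ c * sqrt (xi ^ 2 - k1 ^ 2) * P <= Rabs wronsk_ev.
Hypotheses (hx1 : Rabs xi <> k1) (hx2 : Rabs xi <> k2) (hx3 : ~ In (Rabs xi) zs).

Lemma wronsk_neq_0 : wronsk um dum up dup <> RtoC 0.
Proof.
  intros e. destruct (Rlt_le_dec (Rabs xi) k1) as [c1|c1].
  - pose proof (prop_wronsk_ge c1) as hge. pose proof (prop_K c1).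
    rewrite e, Cmod_0 in hge. lra.
  - assert (c1' : k1 < Rabs xi) by lra. rewrite (ev_wronsk c1') in e.
    injection e as e. pose proof (ev_B c1') as hB.
    destruct (Rlt_le_dec (Rabs xi) k2) as [c2|c2].
    + destruct (Hzs (conj c1' c2) hx3) as [[hP _] hWP]. rewrite e, Rabs_R0 in hWP.
      assert (0 < c * sqrt (xi ^ 2 - k1 ^ 2) * P) by (repeat apply Rmult_lt_0_compat; auto).
      lra.
    + pose proof (above_wronsk c1' ltac:(lra)) as hWa. rewrite e, Rabs_R0 in hWa.
      assert (0 < exp (- (sqrt (xi ^ 2 - k1 ^ 2) * d)) ^ 2 * sqrt (xi ^ 2 - k1 ^ 2)
                  * exp (sqrt (xi ^ 2 - k2 ^ 2) * d) ^ 2)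
        by (repeat apply Rmult_lt_0_compat; try apply exp_pos; lra).
      lra.
Qed.

Hypotheses (hCa : const_above <= Cst) (hCb : const_band c L <= Cst) (hC1 : 1 <= Cst).

Lemma res_bounds_of_Cmod lo hi r : lo < hi ->
  Cmod r = Cmod (up hi) * Cmod (up (- lo)) / Cmod (wronsk um dum up dup) ->
  res_bounds k1 k2 d Cst xi lo hi zs r.
Proof.
  intros hlt hr. unfold res_bounds. cbv zeta. rewrite hr. pose proof (Rabs_pos xi).
  destruct (Rlt_le_dec (Rabs xi) k1) as [c1|c1].
  - split; [intros; lra | split; [intros; lra | intros _]].
    pose proof (prop_K c1) as hK.
    replace (sqrt (Rabs (xi ^ 2 - k1 ^ 2))) with (sqrt (k1 ^ 2 - xi ^ 2))
      by (f_equal; rewrite Rabs_left; [ring | pose proof (prop_sq c1); lra]).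
    eapply Rle_trans; [apply (prop_bound c1 lo hi hlt)|].
    unfold Rdiv. apply Rmult_le_compat_r; [left; apply Rinv_0_lt_compat|]; lra.
  - assert (c1' : k1 < Rabs xi) by lra. rewrite (ev_Cmod_ratio c1').
    pose proof (ev_B c1') as hB. pose proof (exp_pos (- sqrt (xi ^ 2 - k1 ^ 2) * Rabs (hi - lo))).
    destruct (Rlt_le_dec (Rabs xi) k2) as [c2|c2].
    + split; [intros; lra | split; [intros _ | intros; lra]].
      destruct (Hzs (conj c1' c2) hx3) as [[hP hPL] hWP].
      rewrite (Rabs_pos_eq (xi ^ 2 - k1 ^ 2)) by (pose proof (ev_sq c1'); lra).
      eapply Rle_trans; [apply (band_bound c1' c2 c P L lo hi hc hP hPL hWP hlt)|].
      fold P. unfold Rdiv. apply Rmult_le_compat_r; [left; apply Rinv_0_lt_compat; nra | nra].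
    + assert (c2' : k2 < Rabs xi) by lra. destruct (above_bound c1' c2' lo hi hlt) as [a1 a2].
      split; [|split; intros; lra]. intros _.
      assert (hinv : forall e, 0 <= e ->
                const_above / (1 + Rabs xi) * e <= Cst / (1 + Rabs xi) * e)
        by (intros e he; unfold Rdiv; apply Rmult_le_compat_r, Rmult_le_compat_r;
            [| left; apply Rinv_0_lt_compat |]; lra).
      split; [intros hout | intros _]; (eapply Rle_trans; [apply a1, hout || apply a2|]);
        apply hinv; left; apply exp_pos.
Qed.

Lemma resolvent_bounds lo hi : lo < hi ->
  res_bounds k1 k2 d Cst xi lo hi zs (resolvent um up (wronsk um dum up dup) hi lo) /\
  res_bounds k1 k2 d Cst xi lo hi zs (resolvent um up (wronsk um dum up dup) lo hi).
Proof.
  intros hlt. destruct (Cmod_resolvent lo hi hlt wronsk_neq_0) as [e1 e2].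
  split; apply res_bounds_of_Cmod; assumption.
Qed.

End Bounds.

End Jost.

Lemma band_zeros k1 k2 d : 0 < k1 -> k1 < k2 -> 0 < d ->
  let ka := sqrt (k2 ^ 2 - k1 ^ 2) in
  NoDup (zeros k2 ka d) /\
  (forall z, In z (zeros k2 ka d) <-> k1 < z < k2 /\ wronsk_ev k1 k2 d z = 0) /\
  (forall xi, k1 < Rabs xi < k2 -> ~ In (Rabs xi) (zeros k2 ka d) ->
     0 < zero_prod k2 ka d xi <= zero_prod_max ka d /\
     zero_const ka d * sqrt (xi ^ 2 - k1 ^ 2) * zero_prod k2 ka d xi
       <= Rabs (wronsk_ev k1 k2 d xi)).
Proof.
  intros hk1 hk12 hd ka.
  assert (hka : 0 < ka) by (apply sqrt_lt_R0; nra).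
  assert (hka2 : ka ^ 2 = k2 ^ 2 - k1 ^ 2) by (apply pow2_sqrt; nra).
  assert (Hpolar := fun xi (h : k1 < Rabs xi < k2) =>
                      band_polar k1 k2 d xi hk1 hd (proj1 h) (proj2 h)).
  fold ka in Hpolar.
  split; [|split].
  - exact (NoDup_zeros k1 k2 ka d _ _ _ _ hk1 hk12 hd hka hka2 Hpolar).
  - exact (In_zeros_iff k1 k2 ka d _ _ _ _ hk1 hk12 hd hka hka2 Hpolar).
  - intros xi hxi hnot. split; [split|].
    + exact (zero_prod_pos k1 k2 ka d xi hxi hnot).
    + exact (proj2 (zero_prod_le k1 k2 ka d _ _ _ _ hk1 hk12 hd hka hka2 Hpolar xi hxi)).
    + exact (Wf_ge_zero_prod k1 k2 ka d _ _ _ _ hk1 hk12 hd hka hka2 Hpolar xi hxi).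
Qed.

Theorem theorem3 (k1 k2 d : R) (hk1 : 0 < k1) (hk12 : k1 < k2) (hd : 0 < d)
  (up dup um dum : R -> R -> C)
  (Hup : forall xi, is_sol k1 k2 d xi (up xi) (dup xi) /\
           (forall x, d < x -> up xi x = expIC (Cmult (RtoC x) (kappa k1 xi))))
  (Hum : forall xi, is_sol k1 k2 d xi (um xi) (dum xi) /\
           (forall x, x < - d -> um xi x = expIC (Cmult (RtoC (- x)) (kappa k1 xi)))) :
  exists zs : list R,
    NoDup zs /\
    (forall z, In z zs <->
       (k1 < z < k2 /\ wronsk (um z) (dum z) (up z) (dup z) = RtoC 0)) /\
    exists Cst : R,
      forall xi x y : R,
        Rabs xi <> k1 -> Rabs xi <> k2 -> ~ In (Rabs xi) zs ->
        let r := resolvent (um xi) (up xi) (wronsk (um xi) (dum xi) (up xi) (dup xi)) x y in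
        (y < x -> res_bounds k1 k2 d Cst xi y x zs r) /\
        (x < y -> res_bounds k1 k2 d Cst xi x y zs r).
Proof.
  destruct (band_zeros k1 k2 d hk1 hk12 hd) as [hND [hIn hband]].
  set (ka := sqrt (k2 ^ 2 - k1 ^ 2)) in *.
  exists (zeros k2 ka d). split; [exact hND | split].
  - intros z. rewrite hIn.
    assert (hW : k1 < z < k2 -> wronsk (um z) (dum z) (up z) (dup z) = (wronsk_ev k1 k2 d z, 0))
      by (intros hz; apply (ev_wronsk k1 k2 d z _ _ _ _ hd (Hup z) (Hum z));
          rewrite Rabs_pos_eq; lra).
    split; intros [hz e]; split; auto; rewrite (hW hz) in *; [rewrite e | injection e]; auto.
  - set (c := zero_const ka d). set (L := zero_prod_max ka d).
    set (Cst := Rmax (Rmax (const_above k1 k2 d) (const_band k1 k2 d c L)) 1).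
    exists Cst. intros xi x y hx1 hx2 hx3. cbv zeta.
    assert (hCa : const_above k1 k2 d <= Cst) by (eapply Rle_trans; apply Rmax_l).
    assert (hCb : const_band k1 k2 d c L <= Cst)
      by (eapply Rle_trans; [apply Rmax_r | apply Rmax_l]).
    assert (hc : 0 < c) by (apply zero_const_pos; [| apply sqrt_lt_R0]; nra).
    pose proof (resolvent_bounds k1 k2 d xi _ _ _ _ hk1 hk12 hd (Hup xi) (Hum xi) (zeros k2 ka d)
                  c L Cst hc (hband xi) hx1 hx2 hx3 hCa hCb (Rmax_r _ _)) as H.
    split; intros hlt; apply (H _ _ hlt).
Qed.
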